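(* Let $E$ be a directed graph and let $(H,S)$ be a reflexive admissible pair of $E$. Then $E$ is all-reflexive if and only if the quotient graph $E/(H,S)$ and the porcupine graph $P_{(H,S)}$ are both all-reflexive. The statement continues to hold if ''all-reflexive'' is replaced everywhere by ''strongly all-reflexive''.
   Context: $E$ is an arbitrary directed graph with vertex set $E^0$, edge set $E^1$, source map $\mathbf{s}$ and range map $\mathbf{r}$. For a set of vertices $V$, the root of $V$ is $R(V)=\{u\in E^0\mid u\geq v \text{ for some } v\in V\}$, where $u\geq v$ means there is a path from $u$ to $v$. A set $H\subseteq E^0$ is hereditary if the range of every path with source in $H$ is in $H$, and saturated if every regular vertex (neither a sink nor an infinite emitter) $v$ with $\mathbf{r}(\mathbf{s}^{-1}(v))\subseteq H$ lies in $H$. For $H$ hereditary and saturated, the set of breaking vertices is $B_H=\{v\in E^0-H\mid v$ is an infinite emitter and $\mathbf{s}^{-1}(v)\cap\mathbf{r}^{-1}(E^0-H)$ is nonempty and finite$\}$. An admissible pair is $(H,S)$ with $H$ hereditary and saturated and $S\subseteq B_H$. Define $H^\bot=E^0-R(H)$ and $S^\bot=B_{H^\bot}-S$; then $(H^\bot,S^\bot)$ is an admissible pair, and $(H,S)$ is called reflexive if $(H,S)=(H^{\bot\bot},S^{\bot\bot})$ (equivalently, $R(H)-H\subseteq R(H^\bot)$ and $S=B_H$). The quotient graph $E/(H,S)$ has vertices $(E^0-H)\cup\{v'\mid v\in B_H-S\}$ and edges $\{e\in E^1\mid \mathbf{r}(e)\notin H\}\cup\{e'\mid e\in E^1,\ \mathbf{r}(e)\in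 B_H-S\}$, with $\mathbf{s},\mathbf{r}$ as in $E$ on the old edges and $\mathbf{s}(e')=\mathbf{s}(e)$, $\mathbf{r}(e')=\mathbf{r}(e)'$. The porcupine graph $P_{(H,S)}$: let $F_1(H,S)$ be the set of paths $e_1\ldots e_n$ of $E$ with $\mathbf{r}(e_n)\in H$ and $\mathbf{s}(e_n)\notin H\cup S$, and $F_2(H,S)$ the set of paths $p$ of positive length with $\mathbf{r}(p)\in S$. For each edge $e\in F_1(H,S)\cup F_2(H,S)$ add a new vertex $w^e$ and a new edge $f^e$ with $\mathbf{s}(f^e)=w^e$, $\mathbf{r}(f^e)=\mathbf{r}(e)$; inductively, for each path $p=eq$ in $F_1(H,S)\cup F_2(H,S)$ with $|q|\geq 1$ add a new vertex $w^p$ and a new edge $f^p$ with $\mathbf{s}(f^p)=w^p$, $\mathbf{r}(f^p)=w^q$. The vertices of $P_{(H,S)}$ are $H\cup S\cup\{w^p\mid p\in F_1(H,S)\cup F_2(H,S)\}$, and its edges are $\{e\in E^1\mid \mathbf{s}(e)\in H\}\cup\{e\in E^1\mid \mathbf{s}(e)\in S,\ \mathbf{r}(e)\in H\}\cup\{f^p\mid p\in F_1(H,S)\cup F_2(H,S)\}$, with $\mathbf{s},\mathbf{r}$ as in $E$ on common edges. A cycle is a closed path whose distinct edges have distinct sources; an exit of a cycle is an edge not on the cycle whose source is on the cycle. A cycle $c$ is extreme if it has exits and for every path $p$ with $\mathbf{s}(p)$ on $c$ there is a path $q$ from $\mathbf{r}(p)$ to a vertex of $c$. A graph is all-reflexive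 if (a) each cycle is either without exits or extreme, (b) each infinite emitter lies on a cycle, and (c) for each infinite path $\alpha$ with vertex set $\alpha^0$, only finitely many edges $e$ with $\mathbf{s}(e)\in\alpha^0$ satisfy $\mathbf{r}(e)\notin R(\alpha^0)$. (Equivalently, every admissible pair of the graph is reflexive.) A graph is strongly all-reflexive if it is all-reflexive and has no cycles without exits. *)

From Stdlib Require Import List.
Import ListNotations.

Record graph : Type := Graph {
  V : Type;
  Ed : Type;
  src : Ed -> V;
  rng : Ed -> V }.

Arguments src {g} _.
Arguments rng {g} _.

Definition finite (T : Type) (P : T -> Prop) : Prop :=
  exists l : list T, forall x, P x -> In x l.
Arguments finite {T} P.

Section Basic.
Variable G : graph.

Definition infinite_emitter (v : V G) : Prop := ~ finite (fun e : Ed G => src e = v).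
Definition sink (v : V G) : Prop := forall e : Ed G, src e <> v.
Definition regular (v : V G) : Prop := ~ sink v /\ ~ infinite_emitter v.

Fixpoint chain (l : list (Ed G)) : Prop :=
  match l with
  | [] => True
  | e :: l' => match l' with
               | [] => True
               | f :: _ => rng e = src f /\ chain l'
               end
  end.

Fixpoint lastE (e : Ed G) (q : list (Ed G)) : Ed G :=
  match q with [] => e | f :: q' => lastE f q' end.

Definition geq (u v : V G) : Prop :=
  u = v \/ exists (e : Ed G) (p : list (Ed G)),
             chain (e :: p) /\ src e = u /\ rng (lastE e p) = v.

Definition root (W : V G -> Prop) : V G -> Prop :=
  fun u => exists v, W v /\ geq u v.

Definition hereditary (H : V G -> Prop) : Prop :=
  forall u v, H u -> geq u v -> H v.

Definition saturated (H : V G -> Prop) : Prop :=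
  forall v, regular v -> (forall e : Ed G, src e = v -> H (rng e)) -> H v.

Definition breaking (H : V G -> Prop) (v : V G) : Prop :=
  ~ H v /\ infinite_emitter v /\
  (exists e : Ed G, src e = v /\ ~ H (rng e)) /\
  finite (fun e : Ed G => src e = v /\ ~ H (rng e)).

Definition admissible (H S : V G -> Prop) : Prop :=
  hereditary H /\ saturated H /\ (forall v, S v -> breaking H v).

Definition perpH (H : V G -> Prop) : V G -> Prop := fun v => ~ root H v.
Definition perpS (H S : V G -> Prop) : V G -> Prop :=
  fun v => breaking (perpH H) v /\ ~ S v.

(** (H,S) = (H^{bot bot}, S^{bot bot}) *)
Definition reflexive (H S : V G -> Prop) : Prop :=
  (forall v, H v <-> perpH (perpH H) v) /\
  (forall v, S v <-> perpS (perpH H) (perpS H S) v).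

Definition cycle (c : list (Ed G)) : Prop :=
  exists e p, c = e :: p /\ chain c /\ rng (lastE e p) = src e /\ NoDup (map (@src G) c).

Definition on_cycle (c : list (Ed G)) (v : V G) : Prop :=
  exists e, In e c /\ src e = v.

Definition exit (c : list (Ed G)) (f : Ed G) : Prop :=
  ~ In f c /\ on_cycle c (src f).

Definition has_exit (c : list (Ed G)) : Prop := exists f, exit c f.

Definition extreme (c : list (Ed G)) : Prop :=
  has_exit c /\
  forall e p, chain (e :: p) -> on_cycle c (src e) ->
    exists w, on_cycle c w /\ geq (rng (lastE e p)) w.

Definition inf_path (a : nat -> Ed G) : Prop :=
  forall n, rng (a n) = src (a (S n)).

Definition inf_path_vertices (a : nat -> Ed G) : V G -> Prop :=
  fun v => exists n, src (a n) = v.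

Definition all_reflexive : Prop :=
  (forall c, cycle c -> ~ has_exit c \/ extreme c) /\
  (forall v, infinite_emitter v -> exists c, cycle c /\ on_cycle c v) /\
  (forall a, inf_path a ->
     finite (fun e : Ed G => inf_path_vertices a (src e) /\
                             ~ root (inf_path_vertices a) (rng e))).

Definition strongly_all_reflexive : Prop :=
  all_reflexive /\ (forall c, cycle c -> has_exit c).

Lemma admissible_hereditary (H S : V G -> Prop) :
  admissible H S -> hereditary H.
Proof. intros [h _]; exact h. Qed.

Lemma hered_edge (H : V G -> Prop) (e : Ed G) :
  hereditary H -> H (src e) -> H (rng e).
Proof.
  intros hH hs. apply (hH _ _ hs). right. exists e, []. simpl. auto.
Qed.

Lemma hered_src_notin (H : V G -> Prop) (e : Ed G) :
  hereditary H -> ~ H (rng e) -> ~ H (src e).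
Proof. intros hH hr hs. apply hr. now apply hered_edge. Qed.

End Basic.

Arguments chain {G} _.
Arguments lastE {G} _ _.

Section Quotient.
Variables (G : graph) (H S : V G -> Prop) (hH : hereditary G H).

Definition QV : Type :=
  ({v : V G | ~ H v} + {v : V G | breaking G H v /\ ~ S v})%type.
Definition QE : Type :=
  ({e : Ed G | ~ H (rng e)} + {e : Ed G | breaking G H (rng e) /\ ~ S (rng e)})%type.

Definition qsrc (x : QE) : QV :=
  match x with
  | inl (exist _ e h) => inl (exist _ (src e) (@hered_src_notin G H e hH h))
  | inr (exist _ e h) => inl (exist _ (src e) (@hered_src_notin G H e hH (proj1 (proj1 h))))
  end.

Definition qrng (x : QE) : QV :=
  match x with
  | inl (exist _ e h) => inl (exist _ (rng e) h)
  | inr (exist _ e h) => inr (exist _ (rng e) h)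
  end.

Definition quotient_graph : graph := @Graph QV QE qsrc qrng.
End Quotient.

Section Porcupine.
Variables (G : graph) (H S : V G -> Prop) (hH : hereditary G H).

Definition F1 (p : list (Ed G)) : Prop :=
  exists e q, p = e :: q /\ chain p /\ H (rng (lastE e q)) /\
              ~ (H (src (lastE e q)) \/ S (src (lastE e q))).
Definition F2 (p : list (Ed G)) : Prop :=
  exists e q, p = e :: q /\ chain p /\ S (rng (lastE e q)).

Definition pv_ok (x : V G + list (Ed G)) : Prop :=
  match x with inl v => H v \/ S v | inr p => F1 p \/ F2 p end.
Definition pe_ok (y : Ed G + list (Ed G)) : Prop :=
  match y with
  | inl e => H (src e) \/ (S (src e) /\ H (rng e))
  | inr p => F1 p \/ F2 p
  end.

(** vertices: H ∪ S ∪ {w^p | p ∈ F1 ∪ F2}  (w^p encoded as inr p) *)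
Definition PV : Type := {x : V G + list (Ed G) | pv_ok x}.
(** edges: old edges (inl e) and f^p (encoded as inr p) *)
Definition PE : Type := {y : Ed G + list (Ed G) | pe_ok y}.

Definition psrc_raw (y : Ed G + list (Ed G)) : V G + list (Ed G) :=
  match y with inl e => inl (src e) | inr p => inr p end.

(** r(f^e) = r(e);  r(f^{eq}) = w^q  for |q| >= 1 *)
Definition prng_raw (y : Ed G + list (Ed G)) : V G + list (Ed G) :=
  match y with
  | inl e => inl (rng e)
  | inr p => match p with
             | [] => inr []
             | e :: q => match q with [] => inl (rng e) | _ => inr q end
             end
  end.

Lemma psrc_ok y : pe_ok y -> pv_ok (psrc_raw y).
Proof.
  destruct y as [e|p]; simpl; auto.
  intros [h|[h _]]; auto.
Qed.

Lemma prng_ok y : pe_ok y -> pv_ok (prng_raw y).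
Proof.
  destruct y as [e|p]; simpl.
  - intros [h|[_ h]]; left; auto. now apply hered_edge.
  - destruct p as [|e q].
    + intros [(e&q&E&_)|(e&q&E&_)]; discriminate.
    + destruct q as [|f q'].
      * intros [(e0&q0&E&_&h&_)|(e0&q0&E&_&h)]; injection E; intros; subst; simpl in *; auto.
      * intros [(e0&q0&E&ch&h1&h2)|(e0&q0&E&ch&h)]; injection E; intros; subst.
        -- left. exists f, q'. simpl in ch. split; [reflexivity|]. split; [apply ch|].
           simpl in h1, h2. auto.
        -- right. exists f, q'. simpl in ch. split; [reflexivity|]. split; [apply ch|].
           simpl in h. auto.
Qed.

Definition psrc (y : PE) : PV := exist _ (psrc_raw (proj1_sig y)) (@psrc_ok (proj1_sig y) (proj2_sig y)).
Definition prng (y : PE) : PV := exist _ (prng_raw (proj1_sig y)) (@prng_ok (proj1_sig y) (proj2_sig y)).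

Definition porcupine_graph : graph := @Graph PV PE psrc prng.
End Porcupine.

From Stdlib Require Import List FinFun Classical ClassicalEpsilon ProofIrrelevance Lia Arith.
Import ListNotations.

(* Reflexivity of (H,S) gives S = B_H and lets every vertex of R(H) - H escape from R(H). If E
   or P_(H,S) is all-reflexive there are no breaking vertices, so S is empty: a breaking vertex is
   an infinite emitter and lies on a cycle, yet it has an edge into H, from which no path returns.

   Without breaking vertices, E/(H,S) is the full subgraph of E on E^0 - H, which is closed under
   predecessors, and the old part of P_(H,S) is the full subgraph on H, closed under successors;
   the new vertices w^p carry no cycle, and every infinite path through them reaches H. An
   embedding onto a successor- or predecessor-closed set of vertices transports cycles, exits,
   extremality, emitters and infinite paths, so the two graphs are all-reflexive exactly when E
   satisfies the three conditions for everything starting in H, resp. relativised to E^0 - H.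

   Gluing the two halves back uses the escape property. An escape from a cycle outside H leaves
   R(H) but must return to the cycle, so R(H) - H meets no cycle and its vertices emit finitely
   many edges. An infinite path outside H must leave R(H): otherwise chaining escapes inside the
   root of the path builds another infinite path with infinitely many exits avoiding H. *)

(** * Finiteness *)

Lemma finite_weaken {T} (P Q : T -> Prop) : finite P -> (forall x, Q x -> P x) -> finite Q.
Proof. intros [l hl] h. exists l. intros x hx. apply hl, h, hx. Qed.

Lemma finite_union {T} (P Q : T -> Prop) : finite P -> finite Q -> finite (fun x => P x \/ Q x).
Proof.
  intros [l1 h1] [l2 h2]. exists (l1 ++ l2). intros x [hx|hx]; apply in_or_app; auto.
Qed.

Lemma finite_functional_preimage {A B} (R : A -> B -> Prop) (P : B -> Prop) (Q : A -> Prop) :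
  (forall a a' b, R a b -> R a' b -> a = a') ->
  finite P -> (forall a, Q a -> exists b, R a b /\ P b) -> finite Q.
Proof.
  intros hfun [lb hl] hq.
  assert (hpre : forall lb', exists la, forall a, (exists b, R a b /\ In b lb') -> In a la).
  { intros lb'. induction lb' as [|b lb' [la' hla']].
    - exists []. intros a (b & _ & []).
    - destruct (classic (exists a, R a b)) as [[a0 ha0]|hn].
      + exists (a0 :: la'). intros a (b' & hr & [<-|hin]).
        * left. eapply hfun; eauto.
        * right. apply hla'. eauto.
      + exists la'. intros a (b' & hr & [<-|hin]).
        * exfalso; apply hn; eauto.
        * apply hla'; eauto. }
  destruct (hpre lb) as [la hla]. exists la. intros a ha.
  destruct (hq a ha) as (b & hr & hb). apply hla. eauto.
Qed.

Lemma finite_injective_preimage {A B} (f : A -> B) (P : B -> Prop) (Q : A -> Prop) :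
  (forall a a', f a = f a' -> a = a') ->
  finite P -> (forall a, Q a -> P (f a)) -> finite Q.
Proof.
  intros hinj hP hq. apply (finite_functional_preimage (fun a b => f a = b) P Q); auto.
  - intros a a' b <- h. apply hinj. auto.
  - intros a ha. exists (f a). auto.
Qed.

Lemma finite_image {A B} (f : A -> B) (P : A -> Prop) (Q : B -> Prop) :
  finite P -> (forall b, Q b -> exists a, P a /\ f a = b) -> finite Q.
Proof.
  intros [l hl] h. exists (map f l). intros b hb. destruct (h b hb) as (a & ha & <-).
  apply in_map, hl, ha.
Qed.

Lemma finite_big_union {A B} (l : list A) (P : A -> B -> Prop) :
  (forall a, In a l -> finite (P a)) -> finite (fun b => exists a, In a l /\ P a b).
Proof.
  induction l as [|a l IH]; intros h.
  - exists []. intros b (a & [] & _).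
  - destruct (h a (or_introl eq_refl)) as [la hla].
    destruct IH as [lr hlr]. { intros a' ha'. apply h. right. auto. }
    exists (la ++ lr). intros b (a' & [<-|hin] & hp); apply in_or_app.
    + left. auto.
    + right. apply hlr. eauto.
Qed.

Lemma not_finite_unbounded {T} (Q : T -> Prop) (R : nat -> T -> Prop) :
  (forall N, exists n x, N <= n /\ R n x) ->
  (forall n m x, R n x -> R m x -> n = m) ->
  (forall n x, R n x -> Q x) -> ~ finite Q.
Proof.
  intros hunb hinj hQ [l hl].
  assert (hgrow : forall k, exists B xs, length xs = k /\ NoDup xs /\
            forall x, In x xs -> exists n, n < B /\ R n x).
  { induction k as [|k (B & xs & hlen & hnd & hxs)].
    - exists 0, []. repeat split; [constructor|]. intros x [].
    - destruct (hunb B) as (n & x & hBn & hx).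
      exists (S n), (x :: xs). repeat split; [simpl; lia| |].
      + constructor; auto. intros hin. destruct (hxs x hin) as (m & hm & hmx).
        pose proof (hinj _ _ _ hx hmx). lia.
      + intros y [<-|hy]; [exists n; auto|].
        destruct (hxs y hy) as (m & hm & hmy). exists m. split; [lia|auto]. }
  destruct (hgrow (S (length l))) as (B & xs & hlen & hnd & hxs).
  assert (hincl : incl xs l).
  { intros x hx. destruct (hxs x hx) as (n & _ & hn). apply hl, (hQ n), hn. }
  pose proof (NoDup_incl_length hnd hincl). lia.
Qed.

Lemma nat_least_witness (P : nat -> Prop) :
  (exists n, P n) -> exists n, P n /\ forall i, i < n -> ~ P i.
Proof.
  intros [n hn]. revert hn. induction n as [n IH] using lt_wf_ind. intros hn.
  destruct (classic (exists i, i < n /\ P i)) as [(i & hi & hpi)|hno].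
  - apply (IH i hi hpi).
  - exists n. split; auto. intros i hi hpi. apply hno. eauto.
Qed.

Lemma list_argmin {A} (f : A -> nat) (l : list A) :
  l <> [] -> exists x, In x l /\ forall y, In y l -> f x <= f y.
Proof.
  induction l as [|a l IH]; intros hne; [congruence|].
  destruct l as [|b l].
  - exists a. split; [left; auto|]. intros y [<-|[]]; auto.
  - destruct IH as (x & hx & hmin); [discriminate|].
    destruct (le_lt_dec (f a) (f x)) as [hle|hlt].
    + exists a. split; [left; auto|]. intros y [<-|hy]; auto. specialize (hmin y hy). lia.
    + exists x. split; [right; auto|]. intros y [<-|hy]; [lia|auto].
Qed.

Lemma dependent_choice {A} (P : A -> Prop) (R : A -> A -> Prop) :
  (forall x, P x -> exists y, P y /\ R x y) ->
  forall x0, P x0 -> exists f : nat -> A, f 0 = x0 /\ forall n, P (f n) /\ R (f n) (f (S n)).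
Proof.
  intros hstep x0 hx0.
  set (next x := epsilon (inhabits x) (fun y => P y /\ R x y)).
  assert (hnext : forall x, P x -> P (next x) /\ R x (next x))
    by (intros x hx; apply (epsilon_spec (inhabits x) (fun y => P y /\ R x y)), hstep, hx).
  set (f := fix f n := match n with 0 => x0 | S n => next (f n) end).
  assert (hP : forall n, P (f n)) by (induction n; [exact hx0|apply hnext, IHn]).
  exists f. split; [reflexivity|]. intros n. split; [apply hP|apply hnext, hP].
Qed.

(** * Walks *)

Section Walks.
Variable G : graph.

Inductive walk : V G -> list (Ed G) -> V G -> Prop :=
| walk_nil u : walk u [] u
| walk_cons u e l v : src e = u -> walk (rng e) l v -> walk u (e :: l) v.

Definition reach (u v : V G) : Prop := exists l, walk u l v.

Lemma walk_nil_inv u v : walk u [] v -> u = v.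
Proof. intros h; inversion h; auto. Qed.

Lemma walk_cons_inv u e l v : walk u (e :: l) v -> src e = u /\ walk (rng e) l v.
Proof. intros h; inversion h; subst; auto. Qed.

Lemma walk_app u l1 w l2 v : walk u l1 w -> walk w l2 v -> walk u (l1 ++ l2) v.
Proof. induction 1; simpl; intros; auto. constructor; auto. Qed.

Lemma walk_app_inv u l1 l2 v : walk u (l1 ++ l2) v -> exists w, walk u l1 w /\ walk w l2 v.
Proof.
  revert u. induction l1 as [|e l1 IH]; simpl; intros u h.
  - exists u. split; auto. constructor.
  - apply walk_cons_inv in h as [hs h]. destruct (IH _ h) as (w & h1 & h2).
    exists w. split; auto. constructor; auto.
Qed.

Lemma reach_refl u : reach u u.
Proof. exists []. constructor. Qed.

Lemma reach_trans u w v : reach u w -> reach w v -> reach u v.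
Proof. intros [l1 h1] [l2 h2]. exists (l1 ++ l2). eapply walk_app; eauto. Qed.

Lemma reach_edge e : reach (src e) (rng e).
Proof. exists [e]. repeat constructor. Qed.

Lemma walk_cons_iff_chain e p u v :
  walk u (e :: p) v <-> chain (e :: p) /\ src e = u /\ rng (lastE e p) = v.
Proof.
  revert e u. induction p as [|f p IH]; intros e u; split.
  - intros h. apply walk_cons_inv in h as [hs h]. apply walk_nil_inv in h. simpl. auto.
  - intros (_ & <- & <-). repeat constructor.
  - intros h. apply walk_cons_inv in h as [hs h]. apply IH in h as (hc & hf & hl).
    simpl. auto.
  - intros ((hr & hc) & hs & hl). constructor; auto. rewrite hr. apply IH. simpl in hl. auto.
Qed.

Lemma geq_iff_reach u v : geq G u v <-> reach u v.
Proof.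
  split.
  - intros [<-|(e & p & hc & hs & hl)].
    + apply reach_refl.
    + exists (e :: p). apply walk_cons_iff_chain. auto.
  - intros [[|e p] h].
    + left. apply walk_nil_inv, h.
    + right. exists e, p. apply walk_cons_iff_chain, h.
Qed.

Lemma walk_in_split u l v e : walk u l v -> In e l ->
  exists l1 l2, l = l1 ++ e :: l2 /\ walk u l1 (src e) /\ walk (rng e) l2 v.
Proof.
  intros h hin. destruct (in_split _ _ hin) as (l1 & l2 & ->).
  destruct (walk_app_inv _ _ _ _ h) as (w & h1 & h2). apply walk_cons_inv in h2 as [<- h2].
  exists l1, l2. auto.
Qed.

Lemma walk_in_reach u l v e : walk u l v -> In e l -> reach u (src e) /\ reach (src e) v.
Proof.
  intros h hin. destruct (walk_in_split _ _ _ _ h hin) as (l1 & l2 & _ & h1 & h2).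
  split; [exists l1; auto|]. apply reach_trans with (rng e); [apply reach_edge|exists l2; auto].
Qed.

Lemma cycle_iff_closed_walk c :
  cycle G c <-> c <> [] /\ (exists u, walk u c u) /\ NoDup (map (@src G) c).
Proof.
  split.
  - intros (e & p & -> & hc & hl & hnd). split; [discriminate|]. split; auto.
    exists (src e). apply walk_cons_iff_chain. auto.
  - intros (hne & (u & hw) & hnd). destruct c as [|e p]; [congruence|].
    apply walk_cons_iff_chain in hw as (hc & hs & hl). exists e, p. subst. auto.
Qed.

Lemma cycle_nonempty c : cycle G c -> c <> [].
Proof. intros hc. apply cycle_iff_closed_walk in hc. tauto. Qed.

Lemma cycle_closed_walk c : cycle G c -> exists e p, c = e :: p /\ walk (src e) c (src e).
Proof.
  intros hc. apply cycle_iff_closed_walk in hc as (hne & (u & hw) & _).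
  destruct c as [|e p]; [congruence|].
  exists e, p. split; auto. destruct (walk_cons_inv _ _ _ _ hw) as [-> _]. exact hw.
Qed.

Lemma cycle_reach c e f : cycle G c -> In e c -> In f c -> reach (src e) (src f).
Proof.
  intros hc he hf. destruct (cycle_closed_walk c hc) as (e0 & p & _ & hw).
  apply reach_trans with (src e0); [apply (walk_in_reach _ _ _ _ hw he)|].
  apply (walk_in_reach _ _ _ _ hw hf).
Qed.

Lemma on_cycle_reach c u v : cycle G c -> on_cycle G c u -> on_cycle G c v -> reach u v.
Proof. intros hc (e & he & <-) (f & hf & <-). eapply cycle_reach; eauto. Qed.

Lemma cycle_next_edge c e : cycle G c -> In e c -> exists f, In f c /\ src f = rng e.
Proof.
  intros hc he. destruct (cycle_closed_walk c hc) as (e0 & p & hceq & hw).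
  destruct (walk_in_split _ _ _ _ hw he) as (l1 & [|f l2] & heq & _ & h2).
  - apply walk_nil_inv in h2. exists e0. rewrite hceq. split; [left|]; auto.
  - apply walk_cons_inv in h2 as [hs _]. exists f. rewrite heq. split; auto.
    apply in_or_app. right. right. left. auto.
Qed.

Lemma extreme_iff_walks c : extreme G c <-> has_exit G c /\
  (forall u l v, walk u l v -> l <> [] -> on_cycle G c u ->
     exists w, on_cycle G c w /\ reach v w).
Proof.
  split; intros (hx & h); split; auto.
  - intros u [|e p] v hw hne hon; [congruence|].
    apply walk_cons_iff_chain in hw as (hc & <- & <-). destruct (h e p hc hon) as (w & hw1 & hw2).
    exists w. split; auto. apply geq_iff_reach. auto.
  - intros e p hc hon.
    destruct (h (src e) (e :: p) (rng (lastE e p))) as (w & h1 & h2); [|discriminate|auto|].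
    + apply walk_cons_iff_chain. auto.
    + exists w. split; auto. apply geq_iff_reach. auto.
Qed.

Lemma not_NoDup_map_split {A B} (f : A -> B) (l : list A) : ~ NoDup (map f l) ->
  exists l1 a l2 b l3, l = l1 ++ a :: l2 ++ b :: l3 /\ f a = f b.
Proof.
  induction l as [|x l IH]; simpl; intros h.
  - exfalso. apply h. constructor.
  - destruct (classic (In (f x) (map f l))) as [hin|hnin].
    + apply in_map_iff in hin as (b & hb & hbin).
      destruct (in_split _ _ hbin) as (l2 & l3 & ->).
      exists [], x, l2, b, l3. simpl. auto.
    + destruct (classic (NoDup (map f l))) as [hnd|hnd].
      * exfalso. apply h. constructor; auto.
      * destruct (IH hnd) as (l1 & a & l2 & b & l3 & -> & hab).
        exists (x :: l1), a, l2, b, l3. simpl. auto.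
Qed.

(* A repeated source [src a = src b] cuts out the shorter closed walk [a :: l2]. *)
Lemma closed_walk_contains_cycle l u : l <> [] -> walk u l u -> exists c, cycle G c /\ incl c l.
Proof.
  remember (length l) as n eqn:hn. revert l u hn.
  induction n as [n IH] using lt_wf_ind. intros l u hn hne hw.
  destruct (classic (NoDup (map (@src G) l))) as [hnd|hnd].
  - exists l. split; [|apply incl_refl]. apply cycle_iff_closed_walk. eauto.
  - destruct (not_NoDup_map_split _ _ hnd) as (l1 & a & l2 & b & l3 & -> & hab).
    destruct (walk_app_inv _ _ _ _ hw) as (w1 & _ & hw2).
    apply walk_cons_inv in hw2 as [<- hw2].
    destruct (walk_app_inv _ _ _ _ hw2) as (w2 & hw3 & hw4).
    apply walk_cons_inv in hw4 as [<- _].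
    assert (hlen : length (a :: l2) < n).
    { subst n. rewrite length_app. simpl. rewrite length_app. simpl. lia. }
    destruct (IH _ hlen (a :: l2) (src a)) as (c & hc & hinc); [reflexivity|discriminate| |].
    + constructor; auto. rewrite hab. auto.
    + exists c. split; auto. intros x hx. apply hinc in hx. apply in_or_app. right.
      destruct hx as [<-|hx]; [left; auto|right; apply in_or_app; left; auto].
Qed.

Lemma inf_path_segment (a : nat -> Ed G) : inf_path G a ->
  forall k i, walk (src (a i)) (map a (seq i k)) (src (a (i + k))).
Proof.
  intros ha k. induction k as [|k IH]; intros i.
  - simpl. rewrite Nat.add_0_r. constructor.
  - simpl. constructor; auto. rewrite ha. replace (i + S k) with (S i + k) by lia. apply IH.
Qed.

Lemma inf_path_reach (a : nat -> Ed G) : inf_path G a ->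
  forall i j, i <= j -> reach (src (a i)) (src (a j)).
Proof.
  intros ha i j hij. exists (map a (seq i (j - i))).
  replace j with (i + (j - i)) at 2 by lia. apply inf_path_segment; auto.
Qed.

Lemma inf_path_src_injective (a : nat -> Ed G) : inf_path G a ->
  (forall n l, l <> [] -> walk (src (a n)) l (src (a n)) -> False) ->
  forall i j, src (a i) = src (a j) -> i = j.
Proof.
  intros ha hacyc.
  assert (hlt : forall i j, i < j -> src (a i) <> src (a j)).
  { intros i j hij he. apply (hacyc i (map a (seq i (j - i)))).
    - destruct (j - i) eqn:E; [lia|discriminate].
    - rewrite he at 2. replace j with (i + (j - i)) at 2 by lia. apply inf_path_segment, ha. }
  intros i j h. destruct (lt_eq_lt_dec i j) as [[hij|]|hij]; auto.
  - exfalso. apply (hlt i j hij h).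
  - exfalso. apply (hlt j i hij). auto.
Qed.

Lemma root_reach (W : V G -> Prop) u v : reach u v -> root G W v -> root G W u.
Proof.
  intros h (w & hw & hg). exists w. split; auto.
  apply geq_iff_reach. apply geq_iff_reach in hg. eapply reach_trans; eauto.
Qed.

Lemma root_mono (W W' : V G -> Prop) x : (forall y, W y -> W' y) -> root G W x -> root G W' x.
Proof. intros h (w & hw & hg). exists w. auto. Qed.

Lemma root_self (W : V G -> Prop) v : W v -> root G W v.
Proof. intros h. exists v. split; auto. left; auto. Qed.

Lemma root_edge (W : V G -> Prop) e : W (rng e) -> root G W (src e).
Proof. intros h. exists (rng e). split; auto. apply geq_iff_reach, reach_edge. Qed.

Lemma hereditary_reach (H : V G -> Prop) u v : hereditary G H -> H u -> reach u v -> H v.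
Proof. intros hH hu hr. apply (hH u v hu). apply geq_iff_reach; auto. Qed.

End Walks.
Arguments walk {G} _ _ _.
Arguments reach {G} _ _.

Section Concatenation.
Variable G : graph.
Variable t : nat -> V G.
Variable w : nat -> list (Ed G).
Hypothesis w_nonempty : forall k, w k <> [].
Hypothesis w_walk : forall k, walk (t k) (w k) (t (S k)).
Variable dflt : Ed G.

(* [concat_state n = (k, l)]: the [n]-th edge of the concatenation is the head of [l], a suffix
   of [w k]. *)
Fixpoint concat_state (n : nat) : nat * list (Ed G) :=
  match n with
  | 0 => (0, w 0)
  | S n => let (k, l) := concat_state n in
           match l with
           | _ :: ((_ :: _) as l') => (k, l')
           | _ => (S k, w (S k))
           end
  end.

Definition concat_path (n : nat) : Ed G := hd dflt (snd (concat_state n)).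

Lemma concat_state_inv n : let (k, l) := concat_state n in
  k <= n /\ l <> [] /\ incl l (w k) /\ exists u, walk u l (t (S k)).
Proof.
  induction n as [|n IH]; simpl.
  - repeat split; auto using incl_refl. exists (t 0). auto.
  - destruct (concat_state n) as [k l].
    destruct IH as (hk & hne & hincl & u & hw).
    destruct l as [|e [|f l']]; [congruence| |].
    + repeat split; auto using incl_refl; [lia|]. exists (t (S k)). auto.
    + apply walk_cons_inv in hw as [_ hw]. repeat split; [lia|discriminate| |eauto].
      intros x hx. apply hincl. right. auto.
Qed.

Lemma concat_path_inf_path : inf_path G concat_path.
Proof.
  intros n. unfold concat_path. pose proof (concat_state_inv n) as hinv. simpl.
  destruct (concat_state n) as [k l]. destruct hinv as (_ & hne & _ & u & hw).
  destruct l as [|e [|f l']]; [congruence| |]; simpl;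
    apply walk_cons_inv in hw as [_ hw].
  - apply walk_nil_inv in hw. rewrite hw.
    pose proof (w_walk (S k)) as hw'. pose proof (w_nonempty (S k)) as hne'.
    destruct (w (S k)) as [|g l'']; [congruence|].
    apply walk_cons_inv in hw' as [hs _]. auto.
  - apply walk_cons_inv in hw as [hs _]. auto.
Qed.

Lemma concat_path_in n : exists k, In (concat_path n) (w k).
Proof.
  unfold concat_path. pose proof (concat_state_inv n) as hinv.
  destruct (concat_state n) as [k l]. destruct hinv as (_ & hne & hincl & _).
  exists k. destruct l as [|e l]; [congruence|]. apply hincl. left. auto.
Qed.

Lemma concat_state_skip n k l l' : concat_state n = (k, l ++ l') -> l' <> [] ->
  concat_state (n + length l) = (k, l').
Proof.
  revert n. induction l as [|x l IH]; intros n hn hne; simpl.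
  - rewrite Nat.add_0_r. auto.
  - rewrite Nat.add_succ_r. apply (IH (S n)); auto. simpl. rewrite hn.
    destruct l as [|y l], l' as [|z l']; simpl; congruence.
Qed.

Lemma concat_state_reaches k : exists n, k <= n /\ concat_state n = (k, w k).
Proof.
  induction k as [|k (n & hkn & hn)]; [exists 0; auto|].
  destruct (exists_last (w_nonempty k)) as (l & x & hl). rewrite hl in hn.
  pose proof (concat_state_skip n k l [x] hn ltac:(discriminate)) as hskip.
  exists (S (n + length l)). split; [lia|]. simpl. rewrite hskip. reflexivity.
Qed.

Lemma concat_path_visits k : exists n, k <= n /\ src (concat_path n) = t k.
Proof.
  destruct (concat_state_reaches k) as (n & hkn & hn). exists n. split; auto.
  unfold concat_path. rewrite hn. simpl. pose proof (w_walk k) as hw.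
  pose proof (w_nonempty k) as hne. destruct (w k) as [|e l]; [congruence|].
  apply walk_cons_inv in hw as [hs _]. auto.
Qed.
End Concatenation.

Lemma walks_concat (G : graph) (t : nat -> V G) (w : nat -> list (Ed G)) :
  (forall k, w k <> [] /\ walk (t k) (w k) (t (S k))) ->
  exists a, inf_path G a /\ (forall n, exists k, In (a n) (w k)) /\
            (forall k, exists n, k <= n /\ src (a n) = t k).
Proof.
  intros hw. destruct (w 0) as [|dflt l] eqn:hw0; [exfalso; apply (proj1 (hw 0)), hw0|].
  exists (concat_path G w dflt). split; [|split].
  - apply (concat_path_inf_path G t); apply hw.
  - apply (concat_path_in G t); apply hw.
  - apply concat_path_visits; apply hw.
Qed.

(** * Embeddings onto closed sets of vertices *)

Definition meets (G : graph) (c : list (Ed G)) (I : V G -> Prop) : Prop :=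
  exists f, In f c /\ I (src f).

Definition path_exit (G : graph) (a : nat -> Ed G) (e : Ed G) : Prop :=
  inf_path_vertices G a (src e) /\ ~ root G (inf_path_vertices G a) (rng e).

(* For a successor-closed [I], [all_reflexive_from G I] and [exits_from G I] say that the full
   subgraph on [I] is (strongly) all-reflexive; [all_reflexive_within] and [exits_within] say the
   same for a predecessor-closed [I]. *)
Definition all_reflexive_from (G : graph) (I : V G -> Prop) : Prop :=
  (forall c, cycle G c -> meets G c I -> ~ has_exit G c \/ extreme G c) /\
  (forall v, I v -> infinite_emitter G v -> exists c, cycle G c /\ on_cycle G c v) /\
  (forall a, inf_path G a -> I (src (a 0)) -> finite (path_exit G a)).

Definition exits_from (G : graph) (I : V G -> Prop) : Prop :=
  forall c, cycle G c -> meets G c I -> has_exit G c.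

Definition has_exit_within (G : graph) (I : V G -> Prop) (c : list (Ed G)) : Prop :=
  exists f, exit G c f /\ I (rng f).

Definition extreme_within (G : graph) (I : V G -> Prop) (c : list (Ed G)) : Prop :=
  has_exit_within G I c /\
  forall u l v, walk u l v -> l <> [] -> on_cycle G c u -> I v ->
    exists w, on_cycle G c w /\ reach v w.

Definition all_reflexive_within (G : graph) (I : V G -> Prop) : Prop :=
  (forall c, cycle G c -> meets G c I -> ~ has_exit_within G I c \/ extreme_within G I c) /\
  (forall v, I v -> ~ finite (fun e => src e = v /\ I (rng e)) ->
     exists c, cycle G c /\ on_cycle G c v) /\
  (forall a, inf_path G a -> (forall n, I (src (a n))) ->
     finite (fun e => path_exit G a e /\ I (rng e))).

Definition exits_within (G : graph) (I : V G -> Prop) : Prop :=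
  forall c, cycle G c -> meets G c I -> has_exit_within G I c.

Lemma seq_lift {A B} (f : A -> B) (b : nat -> B) :
  (forall n, exists a, f a = b n) -> exists a : nat -> A, forall n, f (a n) = b n.
Proof.
  intros h. exists (fun n => proj1_sig (constructive_indefinite_description _ (h n))).
  intros n. exact (proj2_sig (constructive_indefinite_description _ (h n))).
Qed.

Section Embedding.
Variables G1 G2 : graph.
Variable fV : V G1 -> V G2.
Variable fE : Ed G1 -> Ed G2.
Hypothesis f_src : forall e, src (fE e) = fV (src e).
Hypothesis f_rng : forall e, rng (fE e) = fV (rng e).
Hypothesis fV_inj : forall x y, fV x = fV y -> x = y.
Hypothesis fE_inj : forall x y, fE x = fE y -> x = y.

Lemma walk_map u l v : walk u l v -> walk (fV u) (map fE l) (fV v).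
Proof.
  induction 1; simpl; constructor; auto.
  - rewrite f_src. congruence.
  - rewrite f_rng. auto.
Qed.

Lemma reach_map u v : reach u v -> reach (fV u) (fV v).
Proof. intros [l h]. exists (map fE l). apply walk_map; auto. Qed.

Lemma walk_map_inv l : forall u v, walk (fV u) (map fE l) (fV v) -> walk u l v.
Proof.
  induction l as [|e l IH]; simpl; intros u v h.
  - apply walk_nil_inv in h. rewrite (fV_inj _ _ h). constructor.
  - apply walk_cons_inv in h as [h1 h2]. constructor.
    + apply fV_inj. rewrite <- f_src. auto.
    + apply IH. rewrite <- f_rng. auto.
Qed.

Lemma cycle_map c : cycle G1 c <-> cycle G2 (map fE c).
Proof.
  rewrite !cycle_iff_closed_walk, map_map.
  assert (hsrc : map (fun x => src (fE x)) c = map fV (map (@src G1) c)).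
  { rewrite map_map. apply map_ext. auto. }
  rewrite hsrc. split.
  - intros (hne & (u & hw) & hnd). split; [destruct c; simpl; congruence|]. split.
    + exists (fV u). apply walk_map; auto.
    + apply Injective_map_NoDup; auto.
  - intros (hne & (u & hw) & hnd). destruct c as [|e p]; [simpl in hne; congruence|].
    split; [discriminate|]. split.
    + exists (src e). apply walk_map_inv. simpl in hw |- *.
      destruct (walk_cons_inv _ _ _ _ _ hw) as [hs _]. rewrite <- f_src, hs. auto.
    + eapply NoDup_map_inv; eauto.
Qed.

Lemma on_cycle_map c v : on_cycle G1 c v <-> on_cycle G2 (map fE c) (fV v).
Proof.
  split.
  - intros (e & he & <-). exists (fE e). split; [apply in_map; auto|auto].
  - intros (e2 & he & hs). apply in_map_iff in he as (e & <- & he).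
    exists e. split; auto. apply fV_inj. rewrite <- f_src. auto.
Qed.

Lemma on_cycle_map_inv c w2 : on_cycle G2 (map fE c) w2 -> exists w1, fV w1 = w2.
Proof.
  intros (e & he & <-). apply in_map_iff in he as (e1 & <- & _). exists (src e1). auto.
Qed.

Lemma exit_map c f : exit G1 c f <-> exit G2 (map fE c) (fE f).
Proof.
  unfold exit. rewrite f_src, <- on_cycle_map.
  assert (In (fE f) (map fE c) <-> In f c).
  { split; [|apply in_map]. intros h. apply in_map_iff in h as (x & hx & hin).
    rewrite <- (fE_inj _ _ hx). auto. }
  tauto.
Qed.

Lemma meets_map c (I : V G2 -> Prop) : c <> [] -> (forall v, I (fV v)) -> meets G2 (map fE c) I.
Proof.
  intros hne hI. destruct c as [|e c]; [congruence|]. exists (fE e). split; [left; auto|].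
  rewrite f_src. apply hI.
Qed.

Section Paths.
Variables (a1 : nat -> Ed G1) (a2 : nat -> Ed G2).
Hypothesis a_map : forall n, fE (a1 n) = a2 n.

Lemma inf_path_map : inf_path G1 a1 <-> inf_path G2 a2.
Proof.
  unfold inf_path. split; intros hp n.
  - rewrite <- !a_map, f_src, f_rng. congruence.
  - apply fV_inj. rewrite <- f_src, <- f_rng, !a_map. auto.
Qed.

Lemma path_vertices_map x : inf_path_vertices G1 a1 x <-> inf_path_vertices G2 a2 (fV x).
Proof.
  unfold inf_path_vertices. split.
  - intros (n & <-). exists n. rewrite <- a_map, f_src. auto.
  - intros (n & hn). exists n. apply fV_inj. rewrite <- f_src, a_map. auto.
Qed.

Lemma path_vertices_map_inv x2 : inf_path_vertices G2 a2 x2 -> exists x1, fV x1 = x2.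
Proof. intros (n & <-). exists (src (a1 n)). rewrite <- a_map, f_src. auto. Qed.

Lemma path_root_map (reach_reflect : forall u v, reach (fV u) (fV v) -> reach u v) y :
  root G1 (inf_path_vertices G1 a1) y <-> root G2 (inf_path_vertices G2 a2) (fV y).
Proof.
  split.
  - intros (x & hx & hg). exists (fV x). rewrite <- path_vertices_map.
    split; auto. apply geq_iff_reach, reach_map, geq_iff_reach, hg.
  - intros (x2 & hx & hg). destruct (path_vertices_map_inv _ hx) as (x1 & <-).
    exists x1. rewrite path_vertices_map. split; auto.
    apply geq_iff_reach, reach_reflect, geq_iff_reach, hg.
Qed.
End Paths.

Section SuccessorClosed.
Variable I : V G2 -> Prop.
Hypothesis image_I : forall v2, I v2 <-> exists v1, fV v1 = v2.
Hypothesis lift_out_edge : forall e2, I (src e2) -> exists e1, fE e1 = e2.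
Let I_fV v : I (fV v) := proj2 (image_I (fV v)) (ex_intro _ v eq_refl).

Lemma walk_lift_from l2 : forall u v2, walk (fV u) l2 v2 ->
  exists l1 v1, l2 = map fE l1 /\ v2 = fV v1 /\ walk u l1 v1.
Proof.
  induction l2 as [|e2 l2 IH]; intros u v2 h.
  - apply walk_nil_inv in h. subst. exists [], u. repeat split; auto. constructor.
  - apply walk_cons_inv in h as [hs h].
    destruct (lift_out_edge e2) as (e1 & <-). { rewrite hs. apply I_fV. }
    rewrite f_src in hs. apply fV_inj in hs. subst u.
    rewrite f_rng in h. destruct (IH _ _ h) as (l1 & v1 & -> & -> & hw).
    exists (e1 :: l1), v1. repeat split; auto. constructor; auto.
Qed.

Lemma reach_lift_from u v2 : reach (fV u) v2 -> exists v1, v2 = fV v1 /\ reach u v1.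
Proof.
  intros [l h]. destruct (walk_lift_from _ _ _ h) as (l1 & v1 & _ & -> & hw).
  exists v1. split; auto. exists l1; auto.
Qed.

Lemma reach_reflect_from u v : reach (fV u) (fV v) -> reach u v.
Proof.
  intros h. destruct (reach_lift_from _ _ h) as (v1 & hv & hr). apply fV_inj in hv. subst. auto.
Qed.

Lemma cycle_lift_from c2 : cycle G2 c2 -> meets G2 c2 I ->
  exists c1, c2 = map fE c1 /\ cycle G1 c1.
Proof.
  intros hc (f & hf & hIf). destruct (cycle_closed_walk _ _ hc) as (e & p & hceq & hw).
  apply image_I in hIf as (u1 & hu1).
  assert (hr : reach (src f) (src e)) by (apply (cycle_reach _ c2); auto; rewrite hceq; left; auto).
  rewrite <- hu1 in hr. destruct (reach_lift_from _ _ hr) as (u0 & hu0 & _).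
  rewrite hu0 in hw. destruct (walk_lift_from _ _ _ hw) as (l1 & v1 & hl & hv & hw1).
  exists l1. split; auto. apply cycle_map. rewrite <- hl. exact hc.
Qed.

Lemma has_exit_map_from c1 : has_exit G1 c1 <-> has_exit G2 (map fE c1).
Proof.
  split.
  - intros (f & hf). exists (fE f). apply exit_map; auto.
  - intros (f2 & hf2). destruct (lift_out_edge f2) as (f1 & <-).
    + destruct hf2 as (_ & hon). rewrite image_I. eapply on_cycle_map_inv, hon.
    + exists f1. apply exit_map; auto.
Qed.

Lemma extreme_map_from c1 : extreme G1 c1 <-> extreme G2 (map fE c1).
Proof.
  rewrite !extreme_iff_walks, <- has_exit_map_from. split; intros (hx & h); split; auto.
  - intros u2 l2 v2 hw hne hon.
    destruct (on_cycle_map_inv _ _ hon) as (u1 & <-).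
    destruct (walk_lift_from _ _ _ hw) as (l1 & v1 & -> & -> & hw1).
    apply on_cycle_map in hon.
    destruct (h u1 l1 v1 hw1) as (w & hw2 & hr); [destruct l1; simpl in *; congruence|auto|].
    exists (fV w). split; [apply on_cycle_map; auto|]. apply reach_map; auto.
  - intros u l v hw hne hon.
    destruct (h (fV u) (map fE l) (fV v)) as (w2 & hon2 & hr).
    + apply walk_map; auto.
    + destruct l; simpl; congruence.
    + apply on_cycle_map; auto.
    + destruct (reach_lift_from _ _ hr) as (w1 & -> & hr1). exists w1. split; auto.
      apply on_cycle_map; auto.
Qed.

Lemma infinite_emitter_map_from v : infinite_emitter G1 v <-> infinite_emitter G2 (fV v).
Proof.
  unfold infinite_emitter. split; intros h hf; apply h.
  - apply (finite_injective_preimage fE _ _ fE_inj hf). intros a <-. rewrite f_src. auto.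
  - apply (finite_image fE _ _ hf). intros b hb. destruct (lift_out_edge b) as (a & <-).
    + rewrite hb. apply I_fV.
    + exists a. split; auto. apply fV_inj. rewrite <- f_src. auto.
Qed.

Lemma inf_path_lift_from a2 : inf_path G2 a2 -> I (src (a2 0)) ->
  exists a1, forall n, fE (a1 n) = a2 n.
Proof.
  intros hp h0. apply seq_lift. intros n. apply lift_out_edge.
  induction n as [|n IH]; auto. rewrite <- hp. destruct (lift_out_edge _ IH) as (e1 & <-).
  rewrite f_rng. apply I_fV.
Qed.

Lemma path_exit_finite_map_from a1 a2 : (forall n, fE (a1 n) = a2 n) ->
  finite (path_exit G1 a1) <-> finite (path_exit G2 a2).
Proof.
  intros h. pose proof (path_root_map a1 a2 h reach_reflect_from) as hroot. split; intros hf.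
  - apply (finite_image fE _ _ hf). intros b (hb1 & hb2).
    destruct (lift_out_edge b) as (a & <-).
    + destruct (path_vertices_map_inv a1 a2 h _ hb1) as (x1 & <-). apply I_fV.
    + exists a. split; auto. split.
      * apply (path_vertices_map a1 a2 h). rewrite <- f_src. auto.
      * rewrite hroot, <- f_rng. auto.
  - apply (finite_injective_preimage fE _ _ fE_inj hf). intros a (ha1 & ha2). split.
    + rewrite f_src. apply (path_vertices_map a1 a2 h). auto.
    + rewrite f_rng, <- hroot. auto.
Qed.


Theorem all_reflexive_iff_from : all_reflexive G1 <-> all_reflexive_from G2 I.
Proof.
  split; intros (hcyc & hemit & hpath); split; [| split | | split].
  - intros c2 hc2 hf. destruct (cycle_lift_from c2 hc2 hf) as (c1 & -> & hc1).
    rewrite <- has_exit_map_from, <- extreme_map_from. auto.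
  - intros v2 hv hinf. apply image_I in hv as (v1 & <-).
    apply infinite_emitter_map_from in hinf. destruct (hemit v1 hinf) as (c1 & hc1 & hon).
    exists (map fE c1). rewrite <- cycle_map, <- on_cycle_map. auto.
  - intros a2 hp h0. destruct (inf_path_lift_from a2 hp h0) as (a1 & ha1).
    apply (path_exit_finite_map_from a1 a2 ha1), hpath. apply (inf_path_map a1 a2 ha1), hp.
  - intros c1 hc1. rewrite has_exit_map_from, extreme_map_from. apply hcyc.
    + apply cycle_map, hc1.
    + apply meets_map; [apply cycle_nonempty, hc1|apply I_fV].
  - intros v1 hinf. apply infinite_emitter_map_from in hinf.
    destruct (hemit (fV v1) (I_fV v1) hinf) as (c2 & hc2 & hon).
    destruct (cycle_lift_from c2 hc2) as (c1 & -> & hc1).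
    { destruct hon as (e & he & hs). exists e. rewrite hs. split; auto. }
    exists c1. rewrite on_cycle_map. auto.
  - intros a1 hp. apply (path_exit_finite_map_from a1 (fun n => fE (a1 n))); auto.
    apply hpath; [apply (inf_path_map a1); auto|]. rewrite f_src. apply I_fV.
Qed.

Theorem exits_iff_from : (forall c, cycle G1 c -> has_exit G1 c) <-> exits_from G2 I.
Proof.
  split.
  - intros h c2 hc2 hf. destruct (cycle_lift_from c2 hc2 hf) as (c1 & -> & hc1).
    apply has_exit_map_from. auto.
  - intros h c1 hc1. apply has_exit_map_from. apply h.
    + apply cycle_map, hc1.
    + apply meets_map; [apply cycle_nonempty, hc1|apply I_fV].
Qed.
End SuccessorClosed.

Section PredecessorClosed.
Variable I : V G2 -> Prop.
Hypothesis image_I : forall v2, I v2 <-> exists v1, fV v1 = v2.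
Hypothesis lift_in_edge : forall e2, I (rng e2) -> exists e1, fE e1 = e2.

Let I_fV v : I (fV v) := proj2 (image_I (fV v)) (ex_intro _ v eq_refl).

Lemma walk_lift_within l2 : forall u2 v, walk u2 l2 (fV v) ->
  exists l1 u1, l2 = map fE l1 /\ u2 = fV u1 /\ walk u1 l1 v.
Proof.
  induction l2 as [|e2 l2 IH]; intros u2 v h.
  - apply walk_nil_inv in h. subst. exists [], v. repeat split; auto. constructor.
  - apply walk_cons_inv in h as [<- h].
    destruct (IH _ _ h) as (l1 & u1 & -> & hu & hw).
    destruct (lift_in_edge e2) as (e1 & <-). { rewrite hu. apply I_fV. }
    rewrite f_rng in hu. apply fV_inj in hu. subst u1.
    exists (e1 :: l1), (src e1). repeat split; auto. constructor; auto.
Qed.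

Lemma reach_lift_within u2 v : reach u2 (fV v) -> exists u1, u2 = fV u1 /\ reach u1 v.
Proof.
  intros [l h]. destruct (walk_lift_within _ _ _ h) as (l1 & u1 & _ & -> & hw).
  exists u1. split; auto. exists l1; auto.
Qed.

Lemma reach_reflect_within u v : reach (fV u) (fV v) -> reach u v.
Proof.
  intros h. destruct (reach_lift_within _ _ h) as (u1 & hu & hr). apply fV_inj in hu. subst. auto.
Qed.

Lemma image_I_backward u v : reach u v -> I v -> I u.
Proof.
  intros h hv. apply image_I in hv as (v1 & <-).
  destruct (reach_lift_within _ _ h) as (u1 & -> & _). apply I_fV.
Qed.

Lemma cycle_lift_within c2 : cycle G2 c2 -> meets G2 c2 I ->
  exists c1, c2 = map fE c1 /\ cycle G1 c1.
Proof.
  intros hc (f & hf & hIf). destruct (cycle_closed_walk _ _ hc) as (e & p & hceq & hw).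
  assert (hr : reach (src e) (src f)) by (apply (cycle_reach _ c2); auto; rewrite hceq; left; auto).
  destruct (proj1 (image_I _) (image_I_backward _ _ hr hIf)) as (u0 & hu0).
  rewrite <- hu0 in hw at 2. destruct (walk_lift_within _ _ _ hw) as (l1 & u1 & hl & _ & _).
  exists l1. split; auto. apply cycle_map. rewrite <- hl. exact hc.
Qed.

Lemma has_exit_map_within c1 : has_exit G1 c1 <-> has_exit_within G2 I (map fE c1).
Proof.
  split.
  - intros (f & hf). exists (fE f). rewrite <- exit_map, f_rng. split; auto.
  - intros (f2 & hf2 & hi). destruct (lift_in_edge f2 hi) as (f1 & <-).
    exists f1. apply exit_map; auto.
Qed.

Lemma extreme_map_within c1 : extreme G1 c1 <-> extreme_within G2 I (map fE c1).
Proof.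
  rewrite extreme_iff_walks. unfold extreme_within. rewrite <- has_exit_map_within.
  split; intros (hx & h); split; auto.
  - intros u2 l2 v2 hw hne hon hiv.
    apply image_I in hiv as (v1 & <-).
    destruct (walk_lift_within _ _ _ hw) as (l1 & u1 & -> & -> & hw1).
    apply on_cycle_map in hon.
    destruct (h u1 l1 v1 hw1) as (w & hw2 & hr); [destruct l1; simpl in *; congruence|auto|].
    exists (fV w). split; [apply on_cycle_map; auto|]. apply reach_map; auto.
  - intros u l v hw hne hon.
    destruct (h (fV u) (map fE l) (fV v)) as (w2 & hon2 & hr).
    + apply walk_map; auto.
    + destruct l; simpl; congruence.
    + apply on_cycle_map; auto.
    + apply I_fV.
    + destruct (on_cycle_map_inv _ _ hon2) as (w1 & <-).
      exists w1. split; [apply on_cycle_map; auto|]. apply reach_reflect_within. auto.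
Qed.

Lemma infinite_emitter_map_within v :
  infinite_emitter G1 v <-> ~ finite (fun e2 => src e2 = fV v /\ I (rng e2)).
Proof.
  unfold infinite_emitter. split; intros h hf; apply h.
  - apply (finite_injective_preimage fE _ _ fE_inj hf). intros a <-.
    rewrite f_src, f_rng. split; auto.
  - apply (finite_image fE _ _ hf). intros b (hb & hi). destruct (lift_in_edge b hi) as (a & <-).
    exists a. split; auto. apply fV_inj. rewrite <- f_src. auto.
Qed.

Lemma inf_path_lift_within a2 : inf_path G2 a2 -> (forall n, I (src (a2 n))) ->
  exists a1, forall n, fE (a1 n) = a2 n.
Proof. intros hp h. apply seq_lift. intros n. apply lift_in_edge. rewrite hp. auto. Qed.

Lemma path_exit_finite_map_within a1 a2 : (forall n, fE (a1 n) = a2 n) ->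
  finite (path_exit G1 a1) <-> finite (fun e => path_exit G2 a2 e /\ I (rng e)).
Proof.
  intros h. pose proof (path_root_map a1 a2 h reach_reflect_within) as hroot. split; intros hf.
  - apply (finite_image fE _ _ hf). intros b ((hb1 & hb2) & hi).
    destruct (lift_in_edge b hi) as (a & <-).
    exists a. split; auto. split.
    + apply (path_vertices_map a1 a2 h). rewrite <- f_src. auto.
    + rewrite hroot, <- f_rng. auto.
  - apply (finite_injective_preimage fE _ _ fE_inj hf). intros a (ha1 & ha2). split; [split|].
    + rewrite f_src. apply (path_vertices_map a1 a2 h). auto.
    + rewrite f_rng, <- hroot. auto.
    + rewrite f_rng. apply I_fV.
Qed.

Theorem all_reflexive_iff_within : all_reflexive G1 <-> all_reflexive_within G2 I.
Proof.
  split; intros (hcyc & hemit & hpath); split; [| split | | split].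
  - intros c2 hc2 hf. destruct (cycle_lift_within c2 hc2 hf) as (c1 & -> & hc1).
    rewrite <- has_exit_map_within, <- extreme_map_within. auto.
  - intros v2 hv hinf. apply image_I in hv as (v1 & <-).
    apply infinite_emitter_map_within in hinf. destruct (hemit v1 hinf) as (c1 & hc1 & hon).
    exists (map fE c1). rewrite <- cycle_map, <- on_cycle_map. auto.
  - intros a2 hp h0. destruct (inf_path_lift_within a2 hp h0) as (a1 & ha1).
    apply (path_exit_finite_map_within a1 a2 ha1), hpath. apply (inf_path_map a1 a2 ha1), hp.
  - intros c1 hc1. rewrite has_exit_map_within, extreme_map_within. apply hcyc.
    + apply cycle_map, hc1.
    + apply meets_map; [apply cycle_nonempty, hc1|apply I_fV].
  - intros v1 hinf. apply infinite_emitter_map_within in hinf.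
    destruct (hemit (fV v1) (I_fV v1) hinf) as (c2 & hc2 & hon).
    destruct (cycle_lift_within c2 hc2) as (c1 & -> & hc1).
    { destruct hon as (e & he & hs). exists e. rewrite hs. split; auto. }
    exists c1. rewrite on_cycle_map. auto.
  - intros a1 hp. apply (path_exit_finite_map_within a1 (fun n => fE (a1 n))); auto.
    apply hpath; [apply (inf_path_map a1); auto|]. intros n. rewrite f_src. apply I_fV.
Qed.

Theorem exits_iff_within : (forall c, cycle G1 c -> has_exit G1 c) <-> exits_within G2 I.
Proof.
  split.
  - intros h c2 hc2 hf. destruct (cycle_lift_within c2 hc2 hf) as (c1 & -> & hc1).
    apply has_exit_map_within. auto.
  - intros h c1 hc1. apply has_exit_map_within. apply h.
    + apply cycle_map, hc1.
    + apply meets_map; [apply cycle_nonempty, hc1|apply I_fV].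
Qed.
End PredecessorClosed.
End Embedding.

(** * The quotient and the porcupine *)

Section Quotient.
Variables (G : graph) (H S : V G -> Prop) (hH : hereditary G H).
Hypothesis breaking_in_S : forall v, breaking G H v -> S v.

(* With [B_H ⊆ S] there are no primed vertices, so [E/(H,S)] is the full subgraph on [E^0 - H]. *)
Definition quotient_vertex (x : V (quotient_graph G H S hH)) : V G :=
  match x with inl s => proj1_sig s | inr s => proj1_sig s end.
Definition quotient_edge (x : Ed (quotient_graph G H S hH)) : Ed G :=
  match x with inl s => proj1_sig s | inr s => proj1_sig s end.

Lemma quotient_src e : src (quotient_edge e) = quotient_vertex (src e).
Proof. destruct e as [[e h]|[e h]]; reflexivity. Qed.

Lemma quotient_rng e : rng (quotient_edge e) = quotient_vertex (rng e).
Proof. destruct e as [[e h]|[e h]]; reflexivity. Qed.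

Lemma quotient_vertex_inj x y : quotient_vertex x = quotient_vertex y -> x = y.
Proof.
  destruct x as [[x hx]|[x [hb hS]]]; [|exfalso; apply hS, breaking_in_S, hb].
  destruct y as [[y hy]|[y [hb hS]]]; [|exfalso; apply hS, breaking_in_S, hb].
  simpl. intros ->. f_equal. apply subset_eq_compat. auto.
Qed.

Lemma quotient_edge_inj x y : quotient_edge x = quotient_edge y -> x = y.
Proof.
  destruct x as [[x hx]|[x [hb hS]]]; [|exfalso; apply hS, breaking_in_S, hb].
  destruct y as [[y hy]|[y [hb hS]]]; [|exfalso; apply hS, breaking_in_S, hb].
  simpl. intros ->. f_equal. apply subset_eq_compat. auto.
Qed.

Lemma quotient_vertex_image v : ~ H v <-> exists x, quotient_vertex x = v.
Proof.
  split.
  - intros h. exists (inl (exist _ v h)). auto.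
  - intros ([[x hx]|[x [hb hS]]] & <-); [exact hx|]. exfalso. apply hS, breaking_in_S, hb.
Qed.

Lemma quotient_edge_lift e : ~ H (rng e) -> exists x, quotient_edge x = e.
Proof. intros h. exists (inl (exist _ e h)). auto. Qed.

Theorem quotient_all_reflexive :
  all_reflexive (quotient_graph G H S hH) <-> all_reflexive_within G (fun v => ~ H v).
Proof.
  apply (all_reflexive_iff_within _ _ quotient_vertex quotient_edge quotient_src quotient_rng
           quotient_vertex_inj quotient_edge_inj _ quotient_vertex_image quotient_edge_lift).
Qed.

Theorem quotient_exits :
  (forall c, cycle (quotient_graph G H S hH) c -> has_exit _ c) <->
  exits_within G (fun v => ~ H v).
Proof.
  apply (exits_iff_within _ _ quotient_vertex quotient_edge quotient_src quotient_rng
           quotient_vertex_inj quotient_edge_inj _ quotient_vertex_image quotient_edge_lift).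
Qed.
End Quotient.

Section HereditarySubgraph.
Variables (G : graph) (H : V G -> Prop) (hH : hereditary G H).

Definition hereditary_subgraph : graph :=
  @Graph {v : V G | H v} {e : Ed G | H (src e)}
         (fun e => exist _ (src (proj1_sig e)) (proj2_sig e))
         (fun e => exist _ (rng (proj1_sig e)) (hered_edge G H (proj1_sig e) hH (proj2_sig e))).

Definition subgraph_vertex (x : V hereditary_subgraph) : V G := proj1_sig x.
Definition subgraph_edge (x : Ed hereditary_subgraph) : Ed G := proj1_sig x.

Lemma subgraph_vertex_inj x y : subgraph_vertex x = subgraph_vertex y -> x = y.
Proof. apply eq_sig_hprop. intros; apply proof_irrelevance. Qed.

Lemma subgraph_edge_inj x y : subgraph_edge x = subgraph_edge y -> x = y.
Proof. apply eq_sig_hprop. intros; apply proof_irrelevance. Qed.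

Lemma subgraph_vertex_image v : H v <-> exists x, subgraph_vertex x = v.
Proof.
  split.
  - intros h. exists (exist _ v h). auto.
  - intros ([x hx] & <-). auto.
Qed.

Lemma subgraph_edge_lift e : H (src e) -> exists x, subgraph_edge x = e.
Proof. intros h. exists (exist _ e h). auto. Qed.

Theorem subgraph_all_reflexive : all_reflexive hereditary_subgraph <-> all_reflexive_from G H.
Proof.
  exact (all_reflexive_iff_from _ _ subgraph_vertex subgraph_edge (fun _ => eq_refl)
           (fun _ => eq_refl) subgraph_vertex_inj subgraph_edge_inj _ subgraph_vertex_image
           subgraph_edge_lift).
Qed.

Theorem subgraph_exits :
  (forall c, cycle hereditary_subgraph c -> has_exit _ c) <-> exits_from G H.
Proof.
  exact (exits_iff_from _ _ subgraph_vertex subgraph_edge (fun _ => eq_refl)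
           (fun _ => eq_refl) subgraph_vertex_inj subgraph_edge_inj _ subgraph_vertex_image
           subgraph_edge_lift).
Qed.
End HereditarySubgraph.

Section Porcupine.
Variables (G : graph) (H S : V G -> Prop) (hH : hereditary G H).
Let P := porcupine_graph G H S hH.

Definition porcupine_H (x : V P) : Prop := exists v, proj1_sig x = inl v /\ H v.

Lemma porcupine_src_val (y : Ed P) : proj1_sig (src y) = psrc_raw G (proj1_sig y).
Proof. reflexivity. Qed.

Lemma porcupine_rng_val (y : Ed P) : proj1_sig (rng y) = prng_raw G (proj1_sig y).
Proof. reflexivity. Qed.

Definition porcupine_vertex (x : V (hereditary_subgraph G H hH)) : V P :=
  exist _ (inl (proj1_sig x)) (or_introl (proj2_sig x)).
Definition porcupine_edge (x : Ed (hereditary_subgraph G H hH)) : Ed P :=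
  exist _ (inl (proj1_sig x)) (or_introl (proj2_sig x)).

Lemma porcupine_src e : src (porcupine_edge e) = porcupine_vertex (src e).
Proof. apply subset_eq_compat. reflexivity. Qed.

Lemma porcupine_rng e : rng (porcupine_edge e) = porcupine_vertex (rng e).
Proof. apply subset_eq_compat. reflexivity. Qed.

Lemma porcupine_vertex_inj x y : porcupine_vertex x = porcupine_vertex y -> x = y.
Proof.
  intros h. apply eq_sig_hprop; [intros; apply proof_irrelevance|].
  apply (f_equal (@proj1_sig _ _)) in h. simpl in h. congruence.
Qed.

Lemma porcupine_edge_inj x y : porcupine_edge x = porcupine_edge y -> x = y.
Proof.
  intros h. apply eq_sig_hprop; [intros; apply proof_irrelevance|].
  apply (f_equal (@proj1_sig _ _)) in h. simpl in h. congruence.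
Qed.

Lemma porcupine_vertex_image x : porcupine_H x <-> exists y, porcupine_vertex y = x.
Proof.
  split.
  - intros (v & hv & h). exists (exist _ v h).
    apply eq_sig_hprop; [intros; apply proof_irrelevance|].
    simpl. auto.
  - intros ([y hy] & <-). exists y. auto.
Qed.

Lemma porcupine_edge_lift y : porcupine_H (src y) -> exists x, porcupine_edge x = y.
Proof.
  intros (v & hv & h). rewrite porcupine_src_val in hv.
  destruct y as [[e|p] hy]; simpl in hv; [|discriminate].
  injection hv as <-. exists (exist _ e h). apply subset_eq_compat. reflexivity.
Qed.

Theorem porcupine_subgraph_all_reflexive :
  all_reflexive (hereditary_subgraph G H hH) <-> all_reflexive_from P porcupine_H.
Proof.
  exact (all_reflexive_iff_from _ _ porcupine_vertex porcupine_edge porcupine_src porcupine_rng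
           porcupine_vertex_inj porcupine_edge_inj _ porcupine_vertex_image porcupine_edge_lift).
Qed.

Theorem porcupine_subgraph_exits :
  (forall c, cycle (hereditary_subgraph G H hH) c -> has_exit _ c) <-> exits_from P porcupine_H.
Proof.
  exact (exits_iff_from _ _ porcupine_vertex porcupine_edge porcupine_src porcupine_rng
           porcupine_vertex_inj porcupine_edge_inj _ porcupine_vertex_image porcupine_edge_lift).
Qed.

Lemma porcupine_H_successor_closed u w : reach u w -> porcupine_H u -> porcupine_H w.
Proof.
  intros hr hu. apply porcupine_vertex_image in hu as (u1 & <-).
  destruct (reach_lift_from _ _ _ _ porcupine_src porcupine_rng porcupine_vertex_inj
              _ porcupine_vertex_image porcupine_edge_lift _ _ hr) as (w1 & -> & _).
  apply porcupine_vertex_image. eauto.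
Qed.

Section NoS.
Hypothesis S_empty : forall v, ~ S v.

(* The new vertices [w^p] have exactly one outgoing edge [f^p], whose range has a shorter index
   path, so they carry no cycle and no infinite path. *)
Definition porcupine_rank (x : V P) : nat :=
  match proj1_sig x with inl _ => 0 | inr p => length p end.

Lemma porcupine_vertex_cases (x : V P) : porcupine_H x \/ exists p, proj1_sig x = inr p.
Proof.
  destruct x as [[v|p] hx]; simpl.
  - left. exists v. split; auto. destruct hx as [h|h]; [auto|exfalso; apply (S_empty v h)].
  - right. eauto.
Qed.

Lemma porcupine_new_out_edge (y : Ed P) p : proj1_sig (src y) = inr p -> proj1_sig y = inr p.
Proof. rewrite porcupine_src_val. destruct y as [[e|q] hy]; simpl; congruence. Qed.

Lemma porcupine_new_out_edge_unique (y y' : Ed P) p :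
  proj1_sig (src y) = inr p -> src y' = src y -> y = y'.
Proof.
  intros h1 h2. pose proof (porcupine_new_out_edge y p h1) as e1.
  rewrite <- h2 in h1. pose proof (porcupine_new_out_edge y' p h1) as e2.
  apply eq_sig_hprop; [intros; apply proof_irrelevance|]. congruence.
Qed.

Lemma porcupine_rank_decreases (y : Ed P) p :
  proj1_sig (src y) = inr p -> porcupine_rank (rng y) < porcupine_rank (src y).
Proof.
  intros hs. pose proof (porcupine_new_out_edge y p hs) as hy.
  unfold porcupine_rank. rewrite hs, porcupine_rng_val, hy.
  clear hs. destruct y as [yy hok]. simpl in hy. subst yy. simpl in hok. simpl.
  destruct p as [|e [|f q]]; simpl; try lia.
  exfalso. destruct hok as [(e & q & E & _)|(e & q & E & _)]; discriminate.
Qed.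

Lemma porcupine_cycle_meets_H c : cycle P c -> meets P c porcupine_H.
Proof.
  intros hc. apply NNPP. intros hno.
  destruct (list_argmin (fun e => porcupine_rank (src e)) c (cycle_nonempty _ _ hc))
    as (e0 & he0 & hmin).
  destruct (porcupine_vertex_cases (src e0)) as [hI|(p & hp)]; [apply hno; exists e0; auto|].
  destruct (cycle_next_edge _ c e0 hc he0) as (e1 & he1 & hs1).
  specialize (hmin e1 he1). cbv beta in hmin. rewrite hs1 in hmin.
  pose proof (porcupine_rank_decreases e0 p hp). lia.
Qed.

Lemma porcupine_emitter_in_H x : infinite_emitter P x -> porcupine_H x.
Proof.
  intros hinf. destruct (porcupine_vertex_cases x) as [h|(p & hp)]; auto. exfalso. apply hinf.
  destruct (classic (exists y0, src y0 = x)) as [(y0 & hy0)|hno].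
  - exists [y0]. intros y hy. left. subst x. eapply porcupine_new_out_edge_unique; eauto.
  - exists []. intros y hy. apply hno; eauto.
Qed.

Lemma porcupine_path_enters_H a : inf_path P a -> exists k, porcupine_H (src (a k)).
Proof.
  intros hp. apply NNPP. intros hno.
  assert (hdec : forall n, porcupine_rank (src (a (Datatypes.S n))) < porcupine_rank (src (a n))).
  { intros n. destruct (porcupine_vertex_cases (src (a n))) as [h|(p & hpn)].
    - exfalso; apply hno; eauto.
    - rewrite <- hp. apply (porcupine_rank_decreases _ p hpn). }
  assert (hb : forall n, porcupine_rank (src (a n)) + n <= porcupine_rank (src (a 0))).
  { induction n as [|n IH]; [lia|]. specialize (hdec n). lia. }
  specialize (hb (Datatypes.S (porcupine_rank (src (a 0))))). lia.
Qed.

Lemma porcupine_path_exit_finite a k : inf_path P a -> porcupine_H (src (a k)) ->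
  (forall i, i < k -> ~ porcupine_H (src (a i))) ->
  finite (path_exit P (fun n => a (n + k))) -> finite (path_exit P a).
Proof.
  intros hp hk hmin hfin. apply (finite_weaken _ _ hfin). intros e ((i & hi) & hr).
  destruct (lt_dec i k) as [hik|hik].
  - exfalso.
    destruct (porcupine_vertex_cases (src (a i))) as [h|(p & hpi)]; [apply (hmin i hik h)|].
    assert (a i = e) as <- by (eapply porcupine_new_out_edge_unique; eauto).
    apply hr. exists (src (a (Datatypes.S i))). split; [exists (Datatypes.S i); auto|].
    rewrite hp. left. auto.
  - split.
    + exists (i - k). rewrite <- hi. f_equal. f_equal. lia.
    + intros hr'. apply hr. revert hr'. apply root_mono. intros y (n & <-). exists (n + k). auto.
Qed.

Theorem porcupine_all_reflexive_iff_from : all_reflexive P <-> all_reflexive_from P porcupine_H.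
Proof.
  split; intros (hcyc & hemit & hpath); split; [| split | | split].
  - intros c hc _. auto.
  - intros v _ hv. auto.
  - intros a hp _. exact (hpath a hp).
  - intros c hc. apply hcyc; [exact hc|apply porcupine_cycle_meets_H, hc].
  - intros v hv. apply hemit; [apply porcupine_emitter_in_H|]; exact hv.
  - intros a hp. destruct (nat_least_witness _ (porcupine_path_enters_H a hp)) as (k & hk & hmin).
    apply (porcupine_path_exit_finite a k hp hk hmin), hpath; auto.
    intros n. exact (hp (n + k)).
Qed.

Theorem porcupine_exits_iff_from :
  (forall c, cycle P c -> has_exit P c) <-> exits_from P porcupine_H.
Proof.
  split; intros h c hc; auto. apply h, porcupine_cycle_meets_H; auto.
Qed.
End NoS.

Section SVertex.
Variables (v : V G) (hv : S v).
Let x : V P := exist _ (inl v) (or_intror hv).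

Lemma porcupine_S_infinite_emitter : breaking G H v -> infinite_emitter P x.
Proof.
  intros (hnH & hinf & _ & hfin) hf. apply hinf.
  assert (hfinH : finite (fun e : Ed G => src e = v /\ H (rng e))).
  { apply (finite_functional_preimage (fun e (y : Ed P) => proj1_sig y = inl e)
             (fun y : Ed P => src y = x)); auto.
    - intros a a' b h1 h2. congruence.
    - intros e (hs & hr).
      exists (exist _ (inl e) (or_intror (conj (eq_ind_r S hv hs) hr)) : Ed P).
      split; auto. apply subset_eq_compat. simpl. rewrite hs. auto. }
  apply (finite_weaken _ _ (finite_union _ _ hfin hfinH)). intros e he.
  destruct (classic (H (rng e))); [right|left]; auto.
Qed.

(* Every edge of [P] out of [v ∈ S] is an old edge into [H], and [H] is successor-closed in
   [P]. *)
Lemma porcupine_S_not_on_cycle : ~ H v -> forall c, cycle P c -> ~ on_cycle P c x.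
Proof.
  intros hnH c hc (y0 & hy0 & hs0).
  assert (hy : exists e, proj1_sig y0 = inl e /\ src e = v).
  { apply (f_equal (@proj1_sig _ _)) in hs0. rewrite porcupine_src_val in hs0.
    destruct y0 as [[e|p] hok]; simpl in hs0; [|discriminate].
    injection hs0 as hs. exists e. auto. }
  destruct hy as (e & he & hse).
  assert (hre : H (rng e)).
  { pose proof (proj2_sig y0) as hok. simpl in hok. rewrite he in hok.
    destruct hok as [h|(_ & h)]; [rewrite hse in h; contradiction|exact h]. }
  destruct (cycle_next_edge _ c y0 hc hy0) as (y1 & hy1 & hs1).
  assert (hI1 : porcupine_H (src y1)).
  { rewrite hs1. exists (rng e). split; auto. rewrite porcupine_rng_val, he. reflexivity. }
  destruct (porcupine_H_successor_closed _ _ (cycle_reach _ c y1 y0 hc hy1 hy0) hI1)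
    as (z & hz & hzH).
  rewrite hs0 in hz. injection hz as <-. contradiction.
Qed.
End SVertex.

Theorem porcupine_all_reflexive_S_empty : all_reflexive P ->
  (forall v, S v -> breaking G H v) -> forall v, ~ S v.
Proof.
  intros (_ & hemit & _) hSB v hv.
  destruct (hemit _ (porcupine_S_infinite_emitter v hv (hSB v hv))) as (c & hc & hon).
  exact (porcupine_S_not_on_cycle v hv (proj1 (hSB v hv)) c hc hon).
Qed.
End Porcupine.

(** * Splitting [E] along [H] *)

Section Split.
Variables (G : graph) (H : V G -> Prop) (hH : hereditary G H).

Lemma outside_H_backward u v : reach u v -> ~ H v -> ~ H u.
Proof. intros hr hv hu. apply hv. eapply hereditary_reach; eauto. Qed.

Lemma extreme_exit_outside_H c : cycle G c -> extreme G c -> meets G c (fun v => ~ H v) ->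
  forall g, exit G c g -> ~ H (rng g).
Proof.
  intros hc hext (f & hf & hnf) g (hnin & hon) hg.
  apply extreme_iff_walks in hext as (_ & h).
  destruct (h (src g) [g] (rng g)) as (w & hw & hr); [repeat constructor|discriminate|auto|].
  apply hnf. apply (hereditary_reach _ H w); auto.
  - apply (hereditary_reach _ H (rng g)); auto.
  - apply (on_cycle_reach _ c); auto. exists f; auto.
Qed.

Theorem all_reflexive_split : all_reflexive G ->
  all_reflexive_from G H /\ all_reflexive_within G (fun v => ~ H v).
Proof.
  intros (hcyc & hemit & hpath). split; split; [| split | | split].
  - intros c hc _. exact (hcyc c hc).
  - intros v _ hv. exact (hemit v hv).
  - intros a hp _. exact (hpath a hp).
  - intros c hc hf. destruct (hcyc c hc) as [hno|hext].
    + left. intros (g & hg & _). apply hno. exists g; auto.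
    + right. pose proof (extreme_exit_outside_H c hc hext hf) as hout.
      apply extreme_iff_walks in hext as ((g & hg) & hext'). split.
      * exists g. split; [exact hg|exact (hout g hg)].
      * intros u l v hw hne hon _. exact (hext' u l v hw hne hon).
  - intros v _ hv. apply hemit. intros hf. apply hv.
    apply (finite_weaken _ _ hf). intros e [he _]. auto.
  - intros a hp _. apply (finite_weaken _ _ (hpath a hp)). intros e [he _]. auto.
Qed.

(* A breaking vertex lies on a cycle, and an edge from it into [H] is an exit that an extreme
   cycle cannot have. *)
Lemma all_reflexive_no_breaking : all_reflexive G -> forall v, ~ breaking G H v.
Proof.
  intros (hcyc & hemit & _) v (hnv & hinf & _ & hfin).
  destruct (hemit v hinf) as (c & hc & (e & he & hse)).
  assert (hg : exists g, src g = v /\ H (rng g)).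
  { apply NNPP. intros hno. apply hinf. apply (finite_weaken _ _ hfin). intros g hg. split; auto.
    intros hgH. apply hno. eauto. }
  destruct hg as (g & hsg & hgH).
  assert (hgc : ~ In g c).
  { intros hin. destruct (cycle_next_edge _ c g hc hin) as (g' & hg' & hs').
    apply hnv. rewrite <- hse. apply (hereditary_reach _ H (src g')); auto.
    - rewrite hs'; auto.
    - apply (cycle_reach _ c); auto. }
  assert (hx : exit G c g) by (split; auto; exists e; split; congruence).
  destruct (hcyc c hc) as [hno|hext]; [apply hno; exists g; auto|].
  apply (extreme_exit_outside_H c hc hext) with g; auto. exists e. rewrite hse. auto.
Qed.

Lemma cycle_meets_H_or_not c : cycle G c -> meets G c H \/ meets G c (fun v => ~ H v).
Proof.
  intros hc. destruct c as [|e c']; [exfalso; apply (cycle_nonempty _ _ hc); auto|].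
  destruct (classic (H (src e))); [left|right]; exists e; split; auto; left; auto.
Qed.

Lemma exits_of_parts :
  exits_from G H -> exits_within G (fun v => ~ H v) -> forall c, cycle G c -> has_exit G c.
Proof.
  intros hfrom hwithin c hc. destruct (cycle_meets_H_or_not c hc) as [hm|hm].
  - apply hfrom; auto.
  - destruct (hwithin c hc hm) as (g & hg & _). exists g; auto.
Qed.

Theorem exits_split : all_reflexive G ->
  ((forall c, cycle G c -> has_exit G c) <->
   exits_from G H /\ exits_within G (fun v => ~ H v)).
Proof.
  intros har. split; [|intros []; apply exits_of_parts; auto]. intros h. split.
  - intros c hc _. auto.
  - intros c hc hf. destruct (proj1 har c hc) as [hno|hext]; [exfalso; apply hno; auto|].
    destruct (h c hc) as (g & hg). exists g. split; auto.
    apply (extreme_exit_outside_H c hc hext hf g hg).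
Qed.

Section Glue.
Hypothesis escape : forall v, ~ H v -> root G H v -> exists w, reach v w /\ ~ root G H w.
Hypothesis within : all_reflexive_within G (fun v => ~ H v).

Lemma cycle_without_exit_traps c : cycle G c -> ~ has_exit_within G (fun v => ~ H v) c ->
  forall u l w, walk u l w -> ~ H w -> on_cycle G c u -> on_cycle G c w.
Proof.
  intros hc hno u l w hw. induction hw as [u|u g l v hs hw IH]; auto.
  intros hnv hon. apply IH; auto.
  destruct (classic (In g c)) as [hin|hnin].
  - destruct (cycle_next_edge _ c g hc hin) as (g' & hg' & hs'). exists g'. auto.
  - exfalso. apply hno. exists g. split; [split; [exact hnin|rewrite hs; exact hon]|].
    apply (outside_H_backward _ v); auto. exists l; auto.
Qed.

(* An escape from a vertex of such a cycle ends outside [R(H)] yet returns to the cycle. *)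
Lemma cycle_outside_H_not_in_root c : cycle G c -> meets G c (fun v => ~ H v) ->
  forall v, on_cycle G c v -> ~ root G H v.
Proof.
  intros hc hmeets v hon hr. destruct within as (hcyc & _ & _).
  assert (hnv : ~ H v).
  { destruct hmeets as (f & hf & hnf). apply (outside_H_backward _ (src f)); auto.
    apply (on_cycle_reach _ c); auto. exists f; auto. }
  destruct (escape _ hnv hr) as (w & [l hw] & hnw).
  assert (hnHw : ~ H w) by (intros h; apply hnw, root_self, h).
  assert (hback : exists w', on_cycle G c w' /\ reach w w').
  { destruct (hcyc c hc hmeets) as [hno|(_ & hext)].
    - exists w. split; [apply (cycle_without_exit_traps c hc hno v l w); auto|apply reach_refl].
    - destruct l as [|g l]; [apply walk_nil_inv in hw; subst; contradiction|].
      apply (hext v (g :: l) w); auto. discriminate. }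
  destruct hback as (w' & hon' & hr'). apply hnw. apply (root_reach _ _ _ v); auto.
  apply reach_trans with w'; auto. apply (on_cycle_reach _ c); auto.
Qed.

Lemma closed_walk_outside_root x l : l <> [] -> walk x l x -> ~ H x -> ~ root G H x.
Proof.
  intros hne hw hnx hrx. destruct (closed_walk_contains_cycle _ l x hne hw) as (c & hc & hinc).
  destruct c as [|e c']; [apply (cycle_nonempty _ _ hc); auto|].
  destruct (walk_in_reach _ _ _ _ _ hw (hinc e (or_introl eq_refl))) as (_ & hr).
  apply (cycle_outside_H_not_in_root _ hc) with (src e).
  - exists e. split; [left; auto|]. apply (outside_H_backward _ x); auto.
  - exists e. split; [left|]; auto.
  - apply (root_reach _ _ _ x); auto.
Qed.

Hypothesis no_breaking : forall v, ~ breaking G H v.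

Lemma vertex_in_root_finite_emitter x : ~ H x -> root G H x -> finite (fun e => src e = x).
Proof.
  intros hnx hrx. apply NNPP. intros hinf. destruct within as (_ & hemit & _).
  destruct (classic (finite (fun e => src e = x /\ ~ H (rng e)))) as [hfin|hnfin].
  - destruct (classic (exists e, src e = x /\ ~ H (rng e))) as [hex|hnex].
    + apply (no_breaking x). repeat split; auto.
    + destruct (escape x hnx hrx) as (w & [[|g l] hw] & hnw).
      * apply walk_nil_inv in hw. subst. auto.
      * apply walk_cons_inv in hw as (hs & hw). apply hnw, root_self.
        apply (hereditary_reach _ H (rng g)); [auto| |exists l; auto].
        apply NNPP. intros hng. apply hnex. eauto.
  - destruct (hemit x hnx hnfin) as (c & hc & hon).
    apply (cycle_outside_H_not_in_root c hc) with x; auto.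
    destruct hon as (e & he & hs). exists e. rewrite hs. auto.
Qed.

Section LeavingEdges.
Variable W : V G -> Prop.
Hypothesis W_backward : forall y z, reach y z -> W z -> W y.
Hypothesis W_outside_H : forall y, W y -> ~ H y.
Hypothesis W_in_root : forall y, W y -> root G H y.
Hypothesis W_successor : forall y, W y -> exists g, src g = y /\ W (rng g).

Definition leaves_W (x : Ed G) : Prop := W (src x) /\ ~ W (rng x) /\ ~ H (rng x).

Lemma walk_leaving_W t l w : walk t l w -> W t -> ~ W w -> ~ H w ->
  exists x, leaves_W x /\ reach t (src x).
Proof.
  induction 1 as [u|u g l v hs hw IH]; intros ht hnW hnH; [contradiction|].
  destruct (classic (W (rng g))) as [hW|hnW'].
  - destruct (IH hW hnW hnH) as (x & hx & hr). exists x. split; auto.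
    apply reach_trans with (rng g); auto. rewrite <- hs. apply reach_edge.
  - subst u. exists g. split; [|apply reach_refl]. repeat split; auto.
    apply (outside_H_backward _ v); auto. exists l; auto.
Qed.

Lemma reach_leaving_W t : W t -> exists x, leaves_W x /\ reach t (src x).
Proof.
  intros ht. destruct (escape t (W_outside_H t ht) (W_in_root t ht)) as (w & [l hw] & hnw).
  apply (walk_leaving_W t l w hw ht).
  - intros h. apply hnw, W_in_root, h.
  - intros h. apply hnw, root_self, h.
Qed.

Definition leaving_source (s : V G) : Prop := exists x, leaves_W x /\ src x = s.

Lemma leaving_source_next s : leaving_source s ->
  exists l s', l <> [] /\ walk s l s' /\ leaving_source s'.
Proof.
  intros (x & (hW & _) & <-). destruct (W_successor _ hW) as (g & hg & hWg).
  destruct (reach_leaving_W _ hWg) as (x' & hx' & [l hl]).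
  exists (g :: l), (src x'). repeat split; [discriminate|constructor; auto|exists x'; auto].
Qed.

Lemma leaving_source_chain s0 : leaving_source s0 ->
  exists (t : nat -> V G) (w : nat -> list (Ed G)),
    forall k, leaving_source (t k) /\ w k <> [] /\ walk (t k) (w k) (t (Datatypes.S k)).
Proof.
  intros hs0.
  destruct (dependent_choice (fun s : V G * list (Ed G) => leaving_source (fst s))
              (fun s s' => snd s' <> [] /\ walk (fst s) (snd s') (fst s'))) with (s0, @nil (Ed G))
    as (f & _ & hf); [|exact hs0|].
  - intros [s l] hs. destruct (leaving_source_next s hs) as (l' & s' & hne & hw & hs').
    exists (s', l'). auto.
  - exists (fun k => fst (f k)), (fun k => snd (f (Datatypes.S k))). intros k. apply hf.
Qed.

Lemma leaving_path t : W t -> exists b, inf_path G b /\ (forall n, W (src (b n))) /\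
  forall N, exists n, N <= n /\ leaving_source (src (b n)).
Proof.
  intros ht. destruct (reach_leaving_W t ht) as (x0 & hx0 & _).
  destruct (leaving_source_chain (src x0)) as (s & w & hsw); [exists x0; auto|].
  destruct (walks_concat G s w) as (b & hb & hin & hvis); [intros k; apply hsw|].
  exists b. split; [exact hb|split].
  - intros n. destruct (hin n) as (k & hk). destruct (hsw k) as (_ & _ & hw).
    destruct (hsw (Datatypes.S k)) as ((x & (hWx & _) & hsx) & _).
    apply (W_backward _ (s (Datatypes.S k))); [apply (walk_in_reach _ _ _ _ _ hw hk)|].
    rewrite <- hsx. exact hWx.
  - intros N. destruct (hvis N) as (n & hNn & hsn). exists n. rewrite hsn. split; auto. apply hsw.
Qed.

(* The edges leaving [W] from the vertices of [leaving_path] are exits of that path that avoid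
   [H], and there are infinitely many of them. *)
Lemma W_empty t : ~ W t.
Proof.
  intros ht. destruct within as (_ & _ & hpath).
  destruct (leaving_path t ht) as (b & hb & hbW & hleave).
  apply (not_finite_unbounded (fun e => path_exit G b e /\ ~ H (rng e))
           (fun n x => src x = src (b n) /\ leaves_W x));
    [| | |exact (hpath b hb (fun n => W_outside_H _ (hbW n)))].
  - intros N. destruct (hleave N) as (n & hNn & x & hx & hsx). exists n, x. auto.
  - intros n m x (hn & _) (hm & _). apply (inf_path_src_injective _ b hb); [|congruence].
    intros k l hne hw. apply (closed_walk_outside_root _ _ hne hw).
    + apply W_outside_H, hbW.
    + apply W_in_root, hbW.
  - intros n x (hsx & _ & hnW & hnH). split; [split|exact hnH].
    + exists n. auto.
    + intros (y & (m & <-) & hg). apply hnW. apply (W_backward _ (src (b m))); auto.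
      apply geq_iff_reach, hg.
Qed.
End LeavingEdges.

Lemma path_outside_H_leaves_root a : inf_path G a -> (forall n, ~ H (src (a n))) ->
  exists n, ~ root G H (src (a n)).
Proof.
  intros hp hna. apply NNPP. intros hall.
  apply (W_empty (fun y => exists n, reach y (src (a n)))) with (src (a 0)).
  - intros y z hyz (n & hz). exists n. eapply reach_trans; eauto.
  - intros y (n & hy). apply (outside_H_backward _ _ hy), hna.
  - intros y (n & hy). apply (root_reach _ _ _ _ hy). apply NNPP. intros h. apply hall. eauto.
  - intros y (n & [[|g l] hw]).
    + apply walk_nil_inv in hw. subst. exists (a n). split; auto.
      exists (Datatypes.S n). rewrite hp. apply reach_refl.
    + apply walk_cons_inv in hw as (hs & hw). exists g. split; auto. exists n, l. auto.
  - exists 0. apply reach_refl.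
Qed.

Hypothesis from : all_reflexive_from G H.

Lemma glue_cycles c : cycle G c -> ~ has_exit G c \/ extreme G c.
Proof.
  intros hc. destruct from as (hcyc & _ & _).
  destruct (cycle_meets_H_or_not c hc) as [hm|hm]; [apply hcyc; auto|].
  pose proof (cycle_outside_H_not_in_root c hc hm) as hnr.
  assert (hexit : forall g, exit G c g -> ~ H (rng g)).
  { intros g (_ & hon) hg. apply (hnr _ hon), root_edge, hg. }
  destruct within as (hcyc' & _ & _). destruct (hcyc' c hc hm) as [hno|((g & hg & _) & hext)].
  - left. intros (g & hg). apply hno. exists g. auto.
  - right. apply extreme_iff_walks. split; [exists g; auto|].
    intros u l v hw hne hon. apply (hext u l v hw hne hon).
    intros hv. apply (hnr _ hon). exists v. split; auto. apply geq_iff_reach. exists l; auto.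
Qed.

Lemma glue_emitters v : infinite_emitter G v -> exists c, cycle G c /\ on_cycle G c v.
Proof.
  intros hinf. destruct from as (_ & hemit & _). destruct within as (_ & hemit' & _).
  destruct (classic (H v)) as [hv|hv]; [apply hemit; auto|].
  destruct (classic (finite (fun e => src e = v /\ ~ H (rng e)))) as [hfin|hnfin];
    [|apply hemit'; auto].
  exfalso. apply hinf, vertex_in_root_finite_emitter; auto.
  destruct (classic (exists e, src e = v /\ ~ H (rng e))) as [hex|hnex].
  - exfalso. apply (no_breaking v). repeat split; auto.
  - destruct (classic (exists g, src g = v)) as [(g & hg)|hno].
    + rewrite <- hg. apply root_edge. apply NNPP. intros h. apply hnex. eauto.
    + exfalso. apply hinf. exists []. intros e he. apply hno. eauto.
Qed.

(* Before entering [H] a path visits finitely many vertices of [R(H) - H], each with finitely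
   many outgoing edges. *)
Lemma glue_paths_entering_H a k : inf_path G a -> H (src (a k)) ->
  (forall i, i < k -> ~ H (src (a i))) -> finite (path_exit G a).
Proof.
  intros hp hk hmin. destruct from as (_ & _ & hpath).
  pose proof (hpath (fun n => a (n + k)) (fun n => hp (n + k)) hk) as hfin.
  assert (hprefix : finite (fun e => exists i, In i (seq 0 k) /\ src e = src (a i))).
  { apply finite_big_union. intros i hi. apply in_seq in hi.
    apply vertex_in_root_finite_emitter; [apply hmin; lia|].
    apply (root_reach _ _ _ (src (a k))); [apply inf_path_reach; auto; lia|apply root_self, hk]. }
  apply (finite_weaken _ _ (finite_union _ _ hfin hprefix)). intros e ((i & hi) & hr).
  destruct (lt_dec i k) as [hik|hik].
  - right. exists i. split; [apply in_seq; lia|auto].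
  - left. split.
    + exists (i - k). rewrite <- hi. f_equal. f_equal. lia.
    + intros hr'. apply hr. revert hr'. apply root_mono. intros y (n & <-). exists (n + k). auto.
Qed.

(* From its first vertex outside [R(H)] on, the path stays outside [R(H)], so only earlier
   vertices can have edges into [H]. *)
Lemma glue_paths_outside_H a : inf_path G a -> (forall n, ~ H (src (a n))) ->
  finite (path_exit G a).
Proof.
  intros hp hna. destruct within as (_ & _ & hpath).
  destruct (path_outside_H_leaves_root a hp hna) as (N & hN).
  assert (hprefix :
    finite (fun e => exists i, In i (seq 0 N) /\ (src e = src (a i) /\ H (rng e)))).
  { apply finite_big_union. intros i hi.
    destruct (classic (root G H (src (a i)))) as [hr|hnr].
    - apply (finite_weaken _ _ (vertex_in_root_finite_emitter _ (hna i) hr)).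
      intros e [he _]. auto.
    - exists []. intros e (he & hH'). apply hnr. rewrite <- he. apply root_edge, hH'. }
  apply (finite_weaken _ _ (finite_union _ _ (hpath a hp hna) hprefix)).
  intros e ((i & hi) & hr).
  destruct (classic (H (rng e))) as [hre|hre]; [right|left; repeat split; auto; exists i; auto].
  exists i. split; [|auto]. apply in_seq. split; [lia|]. simpl.
  destruct (lt_dec i N) as [h|h]; auto. exfalso. apply hN.
  apply (root_reach _ _ _ (src (a i))); [apply inf_path_reach; auto; lia|].
  rewrite hi. apply root_edge, hre.
Qed.

Theorem all_reflexive_glue : all_reflexive G.
Proof.
  split; [exact glue_cycles|split; [exact glue_emitters|]].
  intros a hp. destruct (classic (exists n, H (src (a n)))) as [hex|hno].
  - destruct (nat_least_witness _ hex) as (k & hk & hmin).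
    apply (glue_paths_entering_H a k hp hk hmin).
  - apply glue_paths_outside_H; auto. intros n h. apply hno. eauto.
Qed.
End Glue.
End Split.

Theorem porcupine_all_reflexive (G : graph) (H S : V G -> Prop) (hH : hereditary G H) :
  (forall v, ~ S v) -> all_reflexive (porcupine_graph G H S hH) <-> all_reflexive_from G H.
Proof.
  intros hS0. rewrite (porcupine_all_reflexive_iff_from G H S hH hS0),
    <- porcupine_subgraph_all_reflexive. apply subgraph_all_reflexive.
Qed.

Theorem porcupine_exits (G : graph) (H S : V G -> Prop) (hH : hereditary G H) :
  (forall v, ~ S v) ->
  (forall c, cycle (porcupine_graph G H S hH) c -> has_exit _ c) <-> exits_from G H.
Proof.
  intros hS0. rewrite (porcupine_exits_iff_from G H S hH hS0), <- porcupine_subgraph_exits.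
  apply subgraph_exits.
Qed.

Section Reflexive.
Variables (G : graph) (H S : V G -> Prop).
Hypothesis hrefl : reflexive G H S.

(* [v] cannot break both [H] and [H^⊥]: it has finitely many edges into [E^0 - H] and into
   [E^0 - H^⊥ = R(H)], and [H ⊆ R(H)]. *)
Lemma reflexive_breaking_in_S v : breaking G H v -> S v.
Proof.
  intros hb. apply (proj2 hrefl v). split.
  - destruct hb as (hnH & hinf & (e & hse & hre) & hfin). split; [|split; [|split]].
    + rewrite <- (proj1 hrefl v). auto.
    + auto.
    + exists e. rewrite <- (proj1 hrefl (rng e)). auto.
    + apply (finite_weaken _ _ hfin). intros x (hx1 & hx2). rewrite (proj1 hrefl). auto.
  - intros ((_ & _ & _ & hfin') & _). destruct hb as (_ & hinf & _ & hfin). apply hinf.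
    apply (finite_weaken _ _ (finite_union _ _ hfin hfin')). intros e he.
    destruct (classic (H (rng e))) as [h|h]; [right|left]; auto.
    split; auto. intros hn. apply hn. exists (rng e). split; auto. left; auto.
Qed.

Lemma reflexive_escape v : ~ H v -> exists w, reach v w /\ ~ root G H w.
Proof.
  intros hv. rewrite (proj1 hrefl) in hv. apply NNPP in hv as (w & hw & hg).
  exists w. split; auto. apply geq_iff_reach; auto.
Qed.
End Reflexive.

Lemma admissible_S_empty (G : graph) (H S : V G -> Prop) (hH : hereditary G H) :
  (forall v, S v -> breaking G H v) ->
  all_reflexive G \/ all_reflexive (porcupine_graph G H S hH) -> forall v, ~ S v.
Proof.
  intros hSB [har|hp] v hv.
  - apply (all_reflexive_no_breaking G H hH har v), hSB, hv.
  - apply (porcupine_all_reflexive_S_empty G H S hH hp hSB v hv).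
Qed.

Theorem proposition3p17 (G : graph) (H S : V G -> Prop)
  (hadm : admissible G H S) (hrefl : reflexive G H S) :
  (all_reflexive G <->
     all_reflexive (quotient_graph G H S (admissible_hereditary G H S hadm)) /\
     all_reflexive (porcupine_graph G H S (admissible_hereditary G H S hadm))) /\
  (strongly_all_reflexive G <->
     strongly_all_reflexive (quotient_graph G H S (admissible_hereditary G H S hadm)) /\
     strongly_all_reflexive (porcupine_graph G H S (admissible_hereditary G H S hadm))).
Proof.
  set (hH := admissible_hereditary G H S hadm).
  pose proof (reflexive_breaking_in_S G H S hrefl) as hBS.
  pose proof (admissible_S_empty G H S hH (proj2 (proj2 hadm))) as hS0.
  assert (hAR : all_reflexive G <->
    all_reflexive (quotient_graph G H S hH) /\ all_reflexive (porcupine_graph G H S hH)).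
  { rewrite (quotient_all_reflexive G H S hH hBS). split.
    - intros har. rewrite (porcupine_all_reflexive G H S hH (hS0 (or_introl har))).
      destruct (all_reflexive_split G H hH har). auto.
    - intros [hwithin hp]. pose proof (hS0 (or_intror hp)) as hS.
      rewrite (porcupine_all_reflexive G H S hH hS) in hp.
      apply (all_reflexive_glue G H hH (fun v hv _ => reflexive_escape G H S hrefl v hv) hwithin);
        auto.
      intros v hb. exact (hS v (hBS v hb)). }
  split; [exact hAR|]. unfold strongly_all_reflexive. split.
  - intros (har & hex). destruct (proj1 hAR har) as (hq & hp).
    apply (exits_split G H hH har) in hex as (hfrom & hwithin).
    rewrite (quotient_exits G H S hH hBS), (porcupine_exits G H S hH (hS0 (or_introl har))). auto.
  - intros ((hq & hqe) & (hp & hpe)). split; [apply hAR; auto|].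
    rewrite (quotient_exits G H S hH hBS) in hqe.
    rewrite (porcupine_exits G H S hH (hS0 (or_intror hp))) in hpe.
    apply (exits_of_parts G H); auto.
Qed.
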